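(* Let $w:\mathbb{Z}\to\mathbb{R}$ be a weight with $w(n)\geq 1$ for all $n$ and $\sup_{n\in\mathbb{Z}}\big(|\tfrac{w(n+1)}{w(n)}|+|\tfrac{w(n)}{w(n+1)}|\big)<\infty$, and fix $1\leq p\leq\infty$. Fix $\underline r=(r_-,r_+)\in\mathbb{N}_0^2$ and summation constants $c_{j,\pm}\in\mathbb{C}$. Suppose $(\alpha(t),\beta(t))$, $(\alpha_\ell(t),\beta_\ell(t))$ and $(\alpha_r(t),\beta_r(t))$ are arbitrary bounded solutions of the equation $\mathrm{AL}_{\underline r}(\alpha,\beta)=0$ of the Ablowitz--Ladik hierarchy, defined for $t\in(t_0-T,t_0+T)$, and set \[ \tilde\alpha(n,t)=\begin{cases}\alpha_r(n,t),& n\geq0,\\ \alpha_\ell(n,t),& n<0,\end{cases}\qquad \tilde\beta(n,t)=\begin{cases}\beta_r(n,t),& n\geq0,\\ \beta_\ell(n,t),& n<0.\end{cases} \] If $\|(\alpha(t)-\tilde\alpha(t),\beta(t)-\tilde\beta(t))\|_{w,p}<\infty$ holds for $t=t_0$, then it holds for all $t\in(t_0-T,t_0+T)$.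
   Context: Sequences are complex valued on $\mathbb{Z}$, $f^\pm(n)=f(n\pm1)$. Solutions are bounded on $\mathbb{Z}\times(t_0-T,t_0+T)$ and $C^1$ in $t$; $T>0$ is the length of the local existence interval. Ablowitz--Ladik hierarchy: define homogeneous coefficients recursively by $\hat f_{0,+}=-\alpha^+$, $\hat g_{0,+}=\tfrac12$, $\hat h_{0,+}=\beta$, $\hat f_{0,-}=\alpha$, $\hat g_{0,-}=\tfrac12$, $\hat h_{0,-}=-\beta^+$, and for $\ell\geq0$ \[ \hat g_{\ell+1,\pm}=\sum_{k=0}^{\ell}\hat f_{\ell-k,\pm}\hat h_{k,\pm}-\sum_{k=1}^{\ell}\hat g_{\ell+1-k,\pm}\hat g_{k,\pm}, \] \[ \hat f_{\ell+1,+}^-=\hat f_{\ell,+}-\alpha(\hat g_{\ell+1,+}+\hat g_{\ell+1,+}^-),\quad \hat h_{\ell+1,+}=\hat h_{\ell,+}^-+\beta(\hat g_{\ell+1,+}+\hat g_{\ell+1,+}^-), \] \[ \hat f_{\ell+1,-}=\hat f_{\ell,-}^-+\alpha(\hat g_{\ell+1,-}+\hat g_{\ell+1,-}^-),\quad \hat h_{\ell+1,-}^-=\hat h_{\ell,-}-\beta(\hat g_{\ell+1,-}+\hat g_{\ell+1,-}^-). \] Given constants $c_{j,\pm}\in\mathbb{C}$, set $f_{\ell,\pm}=\sum_{k=0}^{\ell}c_{\ell-k,\pm}\hat f_{k,\pm}$, and similarly $g_{\ell,\pm}$, $h_{\ell,\pm}$. (These satisfy $g_{0,+}=\tfrac12c_{0,+}$,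 $f_{0,+}=-c_{0,+}\alpha^+$, $h_{0,+}=c_{0,+}\beta$, $g_{\ell+1,+}-g_{\ell+1,+}^-=\alpha h_{\ell,+}^-+\beta f_{\ell,+}$, etc.) The equation $\mathrm{AL}_{\underline r}(\alpha,\beta)=0$ is \[ -i\alpha_t-\alpha(g_{r_+,+}+g_{r_-,-}^-)+f_{r_+-1,+}-f_{r_--1,-}^-=0,\qquad -i\beta_t+\beta(g_{r_+,+}^-+g_{r_-,-})-h_{r_--1,-}+h_{r_+-1,+}^-=0, \] where $f_{-1,\pm}=h_{-1,\pm}=0$. For example $\underline r=(1,1)$, $c_{0,\pm}=1$, $c_{1,\pm}=-2$ gives $-i\alpha_t-(1-\alpha\beta)(\alpha^-+\alpha^+)+2\alpha=0$, $-i\beta_t+(1-\alpha\beta)(\beta^-+\beta^+)-2\beta=0$. Norm: $\|(\alpha,\beta)\|_{w,p}=\big(\sum_n w(n)(|\alpha(n)|^p+|\beta(n)|^p)\big)^{1/p}$ for $1\leq p<\infty$, and $\|(\alpha,\beta)\|_{w,\infty}=\sup_n w(n)(|\alpha(n)|+|\beta(n)|)$. *)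

From Stdlib Require Import Reals ZArith List.
From Coquelicot Require Import Coquelicot.
Import ListNotations.
Open Scope R_scope.

Definition cseq := Z -> C.

Definition shp (f : cseq) : cseq := fun n => f (n + 1)%Z.
Definition shm (f : cseq) : cseq := fun n => f (n - 1)%Z.

Fixpoint csum (N : nat) (F : nat -> C) : C :=
  match N with
  | O => RtoC 0
  | S N' => Cplus (csum N' F) (F N')
  end.

(* the sign +/- labelling the two halves of the hierarchy *)
Inductive pm := Pl | Mi.

(* triples (f_hat, g_hat, h_hat) *)
Definition trip := (cseq * cseq * cseq)%type.
Definition tf (x : trip) : cseq := fst (fst x).
Definition tg (x : trip) : cseq := snd (fst x).
Definition th (x : trip) : cseq := snd x.

Definition zero_seq : cseq := fun _ => RtoC 0.
Definition zero_trip : trip := (zero_seq, zero_seq, zero_seq).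

Definition hat0 (s : pm) (a b : cseq) : trip :=
  match s with
  | Pl => (fun n => Copp (a (n + 1)%Z), fun _ => RtoC (1/2), b)
  | Mi => (a, fun _ => RtoC (1/2), fun n => Copp (b (n + 1)%Z))
  end.

(* Given the list [x_0; ...; x_l] of homogeneous coefficients, compute
   x_{l+1} according to the recursion of the paper. *)
Definition hat_next (s : pm) (a b : cseq) (l : nat) (xs : list trip) : trip :=
  let X k := nth k xs zero_trip in
  let g1 : cseq := fun n =>
      Cminus (csum (S l) (fun k => Cmult (tf (X (l - k)%nat) n) (th (X k) n)))
             (csum l (fun k => Cmult (tg (X (l - k)%nat) n) (tg (X (S k)) n))) in
  match s with
  | Pl =>
    (* f_{l+1,+}^- = f_{l,+} - a (g + g^-) ; h_{l+1,+} = h_{l,+}^- + b (g + g^-) *)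
    (fun n => Cminus (tf (X l) (n + 1)%Z)
                     (Cmult (a (n + 1)%Z) (Cplus (g1 (n + 1)%Z) (g1 n))),
     g1,
     fun n => Cplus (th (X l) (n - 1)%Z)
                    (Cmult (b n) (Cplus (g1 n) (g1 (n - 1)%Z))))
  | Mi =>
    (* f_{l+1,-} = f_{l,-}^- + a (g + g^-) ; h_{l+1,-}^- = h_{l,-} - b (g + g^-) *)
    (fun n => Cplus (tf (X l) (n - 1)%Z)
                    (Cmult (a n) (Cplus (g1 n) (g1 (n - 1)%Z))),
     g1,
     fun n => Cminus (th (X l) (n + 1)%Z)
                     (Cmult (b (n + 1)%Z) (Cplus (g1 (n + 1)%Z) (g1 n))))
  end.

Fixpoint hats (s : pm) (a b : cseq) (l : nat) : list trip :=
  match l with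
  | O => [hat0 s a b]
  | S l' => let xs := hats s a b l' in xs ++ [hat_next s a b l' xs]
  end.

Definition hat (s : pm) (a b : cseq) (l : nat) : trip :=
  nth l (hats s a b l) zero_trip.

Definition coefF (s : pm) (c : nat -> C) (a b : cseq) (l : nat) : cseq :=
  fun n => csum (S l) (fun k => Cmult (c (l - k)%nat) (tf (hat s a b k) n)).
Definition coefG (s : pm) (c : nat -> C) (a b : cseq) (l : nat) : cseq :=
  fun n => csum (S l) (fun k => Cmult (c (l - k)%nat) (tg (hat s a b k) n)).
Definition coefH (s : pm) (c : nat -> C) (a b : cseq) (l : nat) : cseq :=
  fun n => csum (S l) (fun k => Cmult (c (l - k)%nat) (th (hat s a b k) n)).

(* f_{l-1}, h_{l-1} with the convention f_{-1} = h_{-1} = 0 *)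
Definition coefF_pred (s : pm) (c : nat -> C) (a b : cseq) (l : nat) : cseq :=
  match l with O => zero_seq | S l' => coefF s c a b l' end.
Definition coefH_pred (s : pm) (c : nat -> C) (a b : cseq) (l : nat) : cseq :=
  match l with O => zero_seq | S l' => coefH s c a b l' end.

(* The left-hand sides of AL_r(alpha,beta) = 0, given the time derivatives
   (da, db) of (a, b) at the time considered. *)
Definition AL_alpha (rm rp : nat) (cp cm : nat -> C) (a b da : cseq) : cseq :=
  fun n =>
    Cminus (Cplus (Cminus (Copp (Cmult Ci (da n)))
                          (Cmult (a n) (Cplus (coefG Pl cp a b rp n)
                                              (coefG Mi cm a b rm (n - 1)%Z))))
                  (coefF_pred Pl cp a b rp n))
           (coefF_pred Mi cm a b rm (n - 1)%Z).

Definition AL_beta (rm rp : nat) (cp cm : nat -> C) (a b db : cseq) : cseq :=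
  fun n =>
    Cplus (Cminus (Cplus (Copp (Cmult Ci (db n)))
                         (Cmult (b n) (Cplus (coefG Pl cp a b rp (n - 1)%Z)
                                             (coefG Mi cm a b rm n))))
                  (coefH_pred Mi cm a b rm n))
          (coefH_pred Pl cp a b rp (n - 1)%Z).

Definition AL_solution (rm rp : nat) (cp cm : nat -> C) (t0 T : R)
    (alpha beta : Z -> R -> C) : Prop :=
  (exists M : R, forall n t, t0 - T < t < t0 + T ->
        Cmod (alpha n t) <= M /\ Cmod (beta n t) <= M) /\
  exists dalpha dbeta : Z -> R -> C,
    (forall n t, t0 - T < t < t0 + T ->
        is_derive (fun s => alpha n s) t (dalpha n t) /\
        is_derive (fun s => beta n s) t (dbeta n t) /\
        continuous (fun s => dalpha n s) t /\
        continuous (fun s => dbeta n s) t) /\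
    (forall t, t0 - T < t < t0 + T -> forall n,
        AL_alpha rm rp cp cm (fun m => alpha m t) (fun m => beta m t)
                 (fun m => dalpha m t) n = RtoC 0 /\
        AL_beta rm rp cp cm (fun m => alpha m t) (fun m => beta m t)
                (fun m => dbeta m t) n = RtoC 0).

Inductive exponent := PFin (p : R) | PInf.
Definition valid_exponent (p : exponent) : Prop :=
  match p with PFin q => 1 <= q | PInf => True end.

Definition abspow (x q : R) : R :=
  if Req_EM_T x 0 then 0 else Rpower (Rabs x) q.

Definition wnorm_finite (w : Z -> R) (p : exponent) (a b : cseq) : Prop :=
  match p with
  | PFin q => exists B : R, forall N : nat,
      sum_f_R0 (fun k => let n := (Z.of_nat k - Z.of_nat N)%Z in
                 w n * (abspow (Cmod (a n)) q + abspow (Cmod (b n)) q))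
               (2 * N) <= B
  | PInf => exists B : R, forall n, w n * (Cmod (a n) + Cmod (b n)) <= B
  end.

(* Write u = (alpha - alpha~, beta - beta~). The right-hand side of AL_r is a
   polynomial in finitely many shifts of (alpha, beta), so on bounded sequences it is
   bounded and Lipschitz with respect to a window of sites of width K. Since alpha~ is
   a solution away from the junction n = 0, this gives
     |u'(n)| <= L sum_{|j| <= K} |u(n + j)| + E [|n| <= K].
   Over a time step of length d, the supremum S(n) of |u(n)| on the step satisfies
   S(n) <= |u(n, t1)| + 4 d (L sum_j S(n + j) + E [|n| <= K]) by the mean value theorem.
   Multiplying by a weight comparable to its shifts and summing (or taking the
   supremum) gives Phi <= A + c Phi with c <= 1/2 for d small; truncating the weight
   by a geometric sequence makes Phi finite, hence Phi <= 2 A. Finitely many steps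
   of fixed length reach every time of the interval. *)

From Stdlib Require Import Reals ZArith Lra Lia List.
From Coquelicot Require Import Coquelicot.
Open Scope R_scope.

Ltac complex_ring := repeat match goal with x : C |- _ => destruct x end;
  unfold Cminus, Cplus, Copp, Cmult, RtoC; simpl; f_equal; ring.

(** * Mean value inequality for complex-valued functions *)

Lemma is_derive_fst (f : R -> C) x l :
  is_derive f x l -> is_derive (fun s => fst (f s)) x (fst l).
Proof.
  intros H. apply (filterdiff_comp' f (fun c : C => fst c) x _ (fun c : C => fst c) H).
  apply filterdiff_linear, is_linear_fst.
Qed.

Lemma is_derive_snd (f : R -> C) x l :
  is_derive f x l -> is_derive (fun s => snd (f s)) x (snd l).
Proof.
  intros H. apply (filterdiff_comp' f (fun c : C => snd c) x _ (fun c : C => snd c) H).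
  apply filterdiff_linear, is_linear_snd.
Qed.

Lemma MVT_Rabs_le (f df : R -> R) a b Q :
  (forall x, Rmin a b <= x <= Rmax a b -> is_derive f x (df x) /\ Rabs (df x) <= Q) ->
  Rabs (f b - f a) <= Q * Rabs (b - a).
Proof.
  intros H.
  destruct (MVT_abs f df a b) as [c [-> Hc]].
  - intros x Hx. apply is_derive_Reals, H, Hx.
  - apply Rmult_le_compat_r; [apply Rabs_pos | apply H, Hc].
Qed.

Lemma Cmod_le_2_Rmax (z : C) : Cmod z <= 2 * Rmax (Rabs (fst z)) (Rabs (snd z)).
Proof.
  eapply Rle_trans; [apply Cmod_2Rmax|].
  assert (sqrt 2 <= 2).
  { rewrite <- (sqrt_square 2) at 2 by lra. apply sqrt_le_1_alt. lra. }
  apply Rmult_le_compat_r; [|lra].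
  eapply Rle_trans; [apply Rabs_pos|apply Rmax_l].
Qed.

Lemma MVT_Cmod_le (f df : R -> C) a b Q :
  (forall x, Rmin a b <= x <= Rmax a b -> is_derive f x (df x) /\ Cmod (df x) <= Q) ->
  Cmod (Cminus (f b) (f a)) <= 2 * Q * Rabs (b - a).
Proof.
  intros H.
  assert (Hre : Rabs (fst (f b) - fst (f a)) <= Q * Rabs (b - a)).
  { apply (MVT_Rabs_le (fun s => fst (f s)) (fun s => fst (df s))).
    intros x Hx. destruct (H x Hx) as [D M]. split; [now apply is_derive_fst|].
    eapply Rle_trans; [|exact M]. eapply Rle_trans; [apply Rmax_l|apply Rmax_Cmod]. }
  assert (Him : Rabs (snd (f b) - snd (f a)) <= Q * Rabs (b - a)).
  { apply (MVT_Rabs_le (fun s => snd (f s)) (fun s => snd (df s))).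
    intros x Hx. destruct (H x Hx) as [D M]. split; [now apply is_derive_snd|].
    eapply Rle_trans; [|exact M]. eapply Rle_trans; [apply Rmax_r|apply Rmax_Cmod]. }
  eapply Rle_trans; [apply Cmod_le_2_Rmax|].
  rewrite Rmult_assoc. apply Rmult_le_compat_l; [lra|]. now apply Rmax_lub.
Qed.

(** * Symmetric sums over Z *)

Fixpoint sum_sym (N : nat) (f : Z -> R) : R :=
  match N with
  | O => f 0%Z
  | S N' => sum_sym N' f + f (Z.of_nat N) + f (- Z.of_nat N)%Z
  end.

Lemma sum_sym_S N f :
  sum_sym (S N) f = sum_sym N f + f (Z.of_nat N + 1)%Z + f (- (Z.of_nat N + 1))%Z.
Proof. cbn [sum_sym]. now rewrite Nat2Z.inj_succ. Qed.

Lemma sum_sym_ext N f g :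
  (forall j, (Z.abs j <= Z.of_nat N)%Z -> f j = g j) -> sum_sym N f = sum_sym N g.
Proof.
  induction N as [|N IH]; intros H; rewrite ?sum_sym_S; cbn [sum_sym].
  - apply H. simpl. lia.
  - rewrite IH by (intros; apply H; lia). rewrite !H by lia. reflexivity.
Qed.

Lemma sum_sym_le N f g :
  (forall j, (Z.abs j <= Z.of_nat N)%Z -> f j <= g j) -> sum_sym N f <= sum_sym N g.
Proof.
  induction N as [|N IH]; intros H; rewrite ?sum_sym_S; cbn [sum_sym].
  - apply H. simpl. lia.
  - assert (sum_sym N f <= sum_sym N g) by (apply IH; intros; apply H; lia).
    assert (f (Z.of_nat N + 1)%Z <= g (Z.of_nat N + 1)%Z) by (apply H; lia).
    assert (f (- (Z.of_nat N + 1))%Z <= g (- (Z.of_nat N + 1))%Z) by (apply H; lia).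
    lra.
Qed.

Lemma sum_sym_ge0 N f : (forall j, 0 <= f j) -> 0 <= sum_sym N f.
Proof.
  intros H. induction N as [|N IH]; rewrite ?sum_sym_S; cbn [sum_sym]; [apply H|].
  pose proof (H (Z.of_nat N + 1)%Z). pose proof (H (- (Z.of_nat N + 1))%Z). lra.
Qed.

Lemma sum_sym_plus N f g : sum_sym N (fun j => f j + g j) = sum_sym N f + sum_sym N g.
Proof. induction N as [|N IH]; cbn [sum_sym]; rewrite ?IH; ring. Qed.

Lemma sum_sym_scal N c f : sum_sym N (fun j => c * f j) = c * sum_sym N f.
Proof. induction N as [|N IH]; cbn [sum_sym]; rewrite ?IH; ring. Qed.

Lemma sum_sym_const N c : sum_sym N (fun _ => c) = (2 * INR N + 1) * c.
Proof. induction N as [|N IH]; rewrite ?sum_sym_S, ?IH, ?S_INR; simpl; ring. Qed.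

Lemma sum_sym_swap N K (g : Z -> Z -> R) :
  sum_sym N (fun n => sum_sym K (fun j => g n j)) =
  sum_sym K (fun j => sum_sym N (fun n => g n j)).
Proof.
  induction N as [|N IH]; cbn [sum_sym]; [reflexivity|].
  now rewrite IH, <- !sum_sym_plus.
Qed.

Lemma sum_sym_le_widen N N' f :
  (forall j, 0 <= f j) -> (N <= N')%nat -> sum_sym N f <= sum_sym N' f.
Proof.
  intros H L. induction L as [|N' _ IH]; [lra|]. rewrite sum_sym_S.
  pose proof (H (Z.of_nat N' + 1)%Z). pose proof (H (- (Z.of_nat N' + 1))%Z). lra.
Qed.

Lemma sum_sym_term_le N f j :
  (forall j, 0 <= f j) -> (Z.abs j <= Z.of_nat N)%Z -> f j <= sum_sym N f.
Proof.
  intros H. induction N as [|N IH]; intros Hj; cbn [sum_sym].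
  - replace j with 0%Z by lia. lra.
  - pose proof (sum_sym_ge0 N f H).
    pose proof (H (Z.of_nat (S N))). pose proof (H (- Z.of_nat (S N))%Z).
    destruct (Z.eq_dec (Z.abs j) (Z.of_nat (S N))) as [E|E].
    + destruct (Z.abs_spec j) as [[_ Ej]|[_ Ej]]; rewrite Ej in E.
      * replace j with (Z.of_nat (S N)) by lia. lra.
      * replace j with (- Z.of_nat (S N))%Z by lia. lra.
    + pose proof (IH ltac:(lia)). lra.
Qed.

Lemma sum_sym_support N K f :
  (forall j, 0 <= f j) -> (forall j, (Z.of_nat K < Z.abs j)%Z -> f j = 0) ->
  sum_sym N f <= sum_sym K f.
Proof.
  intros H0 Hz. destruct (le_lt_dec N K) as [HNK|HKN]; [now apply sum_sym_le_widen|].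
  replace N with (K + (N - K))%nat by lia.
  induction (N - K)%nat as [|d IH]; rewrite ?Nat.add_0_r; [lra|].
  replace (K + S d)%nat with (S (K + d)) by lia.
  rewrite sum_sym_S, !Hz by lia. lra.
Qed.

Lemma sum_sym_shift_succ N f :
  (forall j, 0 <= f j) -> sum_sym N (fun j => f (j + 1)%Z) <= sum_sym (S N) f.
Proof.
  intros H.
  assert (Tel : sum_sym N (fun j => f (j + 1)%Z) + f (- Z.of_nat N)%Z
                = sum_sym N f + f (Z.of_nat N + 1)%Z).
  { induction N as [|N IH]; [simpl; ring|].
    rewrite !sum_sym_S, Nat2Z.inj_succ. unfold Z.succ.
    replace (- (Z.of_nat N + 1) + 1)%Z with (- Z.of_nat N)%Z by lia.
    replace (- (Z.of_nat N + 1))%Z with (- Z.of_nat N - 1)%Z in * by lia. lra. }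
  rewrite sum_sym_S.
  pose proof (H (- Z.of_nat N)%Z). pose proof (H (- (Z.of_nat N + 1))%Z). lra.
Qed.

Lemma sum_sym_shift_pred N f :
  (forall j, 0 <= f j) -> sum_sym N (fun j => f (j - 1)%Z) <= sum_sym (S N) f.
Proof.
  intros H.
  assert (Tel : sum_sym N (fun j => f (j - 1)%Z) + f (Z.of_nat N)
                = sum_sym N f + f (- Z.of_nat N - 1)%Z).
  { induction N as [|N IH]; [simpl; ring|].
    rewrite !sum_sym_S, Nat2Z.inj_succ. unfold Z.succ.
    replace (Z.of_nat N + 1 - 1)%Z with (Z.of_nat N) by lia.
    replace (- (Z.of_nat N + 1))%Z with (- Z.of_nat N - 1)%Z by lia.
    replace (- Z.of_nat N - 1 - 1)%Z with (- (Z.of_nat N + 1) - 1)%Z in * by lia. lra. }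
  rewrite sum_sym_S.
  replace (- (Z.of_nat N + 1))%Z with (- Z.of_nat N - 1)%Z by lia.
  pose proof (H (Z.of_nat N)). pose proof (H (Z.of_nat N + 1)%Z). lra.
Qed.

Lemma sum_sym_shift_le (h : Z -> R) m j N :
  (forall x, 0 <= h x) -> (Z.abs j <= Z.of_nat m)%Z ->
  sum_sym N (fun n => h (n + j)%Z) <= sum_sym (N + m) h.
Proof.
  intros Hh. revert j N. induction m as [|m IH]; intros j N Hj.
  - rewrite Nat.add_0_r. apply Req_le, sum_sym_ext. intros; f_equal; lia.
  - destruct (Z.eq_dec j 0) as [->|Hj0].
    { rewrite (sum_sym_ext _ _ h) by (intros; f_equal; lia).
      apply sum_sym_le_widen; auto; lia. }
    replace (N + S m)%nat with (S N + m)%nat by lia.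
    destruct (Z_lt_le_dec 0 j).
    + rewrite (sum_sym_ext _ _ (fun n => h ((n + 1) + (j - 1))%Z)) by (intros; f_equal; lia).
      eapply Rle_trans; [apply (sum_sym_shift_succ N (fun x => h (x + (j - 1))%Z)); auto|].
      apply IH. lia.
    + rewrite (sum_sym_ext _ _ (fun n => h ((n - 1) + (j + 1))%Z)) by (intros; f_equal; lia).
      eapply Rle_trans; [apply (sum_sym_shift_pred N (fun x => h (x + (j + 1))%Z)); auto|].
      apply IH. lia.
Qed.

Lemma sum_f_R0_sum_sym N F :
  sum_f_R0 (fun k => F (Z.of_nat k - Z.of_nat N)%Z) (2 * N) = sum_sym N F.
Proof.
  revert F. induction N as [|N IH]; intros F; [reflexivity|].
  replace (2 * S N)%nat with (S (S (2 * N))) by lia.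
  rewrite decomp_sum by lia. cbn [pred sum_f_R0].
  rewrite (sum_eq _ (fun k => F (Z.of_nat k - Z.of_nat N)%Z)).
  2:{ intros k Hk. f_equal. lia. }
  rewrite IH, sum_sym_S.
  replace (Z.of_nat 0 - Z.of_nat (S N))%Z with (- (Z.of_nat N + 1))%Z by lia.
  replace (Z.of_nat (S (S (2 * N))) - Z.of_nat (S N))%Z with (Z.of_nat N + 1)%Z by lia.
  ring.
Qed.

(** * Local maps of pairs of sequences *)

Definition bounded_by (M : R) (a : cseq) : Prop := forall n, Cmod (a n) <= M.

Definition site_dist (a b a' b' : cseq) (m : Z) : R :=
  Cmod (Cminus (a m) (a' m)) + Cmod (Cminus (b m) (b' m)).

Definition window_dist (K : nat) (a b a' b' : cseq) (n : Z) : R :=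
  sum_sym K (fun j => site_dist a b a' b' (n + j)%Z).

Definition local_with (K : nat) (M L : R) (F : cseq -> cseq -> cseq) : Prop :=
  forall a b a' b', bounded_by M a -> bounded_by M b -> bounded_by M a' -> bounded_by M b' ->
  forall n, Cmod (F a b n) <= L /\
            Cmod (Cminus (F a b n) (F a' b' n)) <= L * window_dist K a b a' b' n.

Definition is_local (F : cseq -> cseq -> cseq) : Prop :=
  exists K, forall M, exists L, local_with K M L F.

Lemma site_dist_ge0 a b a' b' m : 0 <= site_dist a b a' b' m.
Proof. unfold site_dist. pose proof (Cmod_ge_0 (Cminus (a m) (a' m))). pose proof (Cmod_ge_0 (Cminus (b m) (b' m))). lra. Qed.

Lemma window_dist_ge0 K a b a' b' n : 0 <= window_dist K a b a' b' n.
Proof. apply sum_sym_ge0. intros; apply site_dist_ge0. Qed.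

Lemma window_dist_widen K K' a b a' b' n :
  (K <= K')%nat -> window_dist K a b a' b' n <= window_dist K' a b a' b' n.
Proof. intros; apply sum_sym_le_widen; auto. intros; apply site_dist_ge0. Qed.

Lemma site_dist_le_window_dist K a b a' b' n :
  site_dist a b a' b' n <= window_dist K a b a' b' n.
Proof.
  unfold window_dist. rewrite <- (Z.add_0_r n) at 1.
  apply (sum_sym_term_le K (fun j => site_dist a b a' b' (n + j)%Z)); [|lia].
  intros; apply site_dist_ge0.
Qed.

Lemma window_dist_shift_succ K a b a' b' n :
  window_dist K a b a' b' (n + 1)%Z <= window_dist (S K) a b a' b' n.
Proof.
  unfold window_dist. rewrite (sum_sym_ext K _ (fun j => site_dist a b a' b' (n + (j + 1))%Z)).
  - apply (sum_sym_shift_succ K (fun j => site_dist a b a' b' (n + j)%Z)). intros; apply site_dist_ge0.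
  - intros; f_equal; lia.
Qed.

Lemma window_dist_shift_pred K a b a' b' n :
  window_dist K a b a' b' (n - 1)%Z <= window_dist (S K) a b a' b' n.
Proof.
  unfold window_dist. rewrite (sum_sym_ext K _ (fun j => site_dist a b a' b' (n + (j - 1))%Z)).
  - apply (sum_sym_shift_pred K (fun j => site_dist a b a' b' (n + j)%Z)). intros; apply site_dist_ge0.
  - intros; f_equal; lia.
Qed.

Lemma local_with_ge0 K M L F : local_with K M L F -> 0 <= M -> 0 <= L.
Proof.
  intros H HM. assert (B0 : bounded_by M zero_seq) by (intros n; unfold zero_seq; rewrite Cmod_0; auto).
  destruct (H _ _ _ _ B0 B0 B0 B0 0%Z) as [H1 _].
  pose proof (Cmod_ge_0 (F zero_seq zero_seq 0%Z)). lra.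
Qed.

Lemma local_with_widen K K' M L L' F :
  (K <= K')%nat -> L <= L' -> local_with K M L F -> local_with K' M L' F.
Proof.
  intros HK HL H a b a' b' Ha Hb Ha' Hb' n.
  destruct (H a b a' b' Ha Hb Ha' Hb' n) as [H1 H2]. split; [lra|].
  pose proof (window_dist_widen K K' a b a' b' n HK). pose proof (window_dist_ge0 K a b a' b' n).
  pose proof (Cmod_ge_0 (F a b n)). nra.
Qed.

Lemma is_local_ext F G : is_local F -> (forall a b n, F a b n = G a b n) -> is_local G.
Proof.
  intros [K HK] E. exists K. intros M. destruct (HK M) as [L HL]. exists L.
  intros a b a' b' **. rewrite <- !E. auto.
Qed.

Lemma is_local_const c : is_local (fun _ _ _ => c).
Proof.
  exists O. intros M. exists (Cmod c). intros a b a' b' **. split; [lra|].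
  replace (Cminus c c) with (RtoC 0) by complex_ring. rewrite Cmod_0.
  apply Rmult_le_pos; [apply Cmod_ge_0|apply window_dist_ge0].
Qed.

Lemma is_local_fst : is_local (fun a b => a).
Proof.
  exists O. intros M. exists (Rmax M 1). intros a b a' b' Ha Hb Ha' Hb' n. split.
  - eapply Rle_trans; [apply Ha|apply Rmax_l].
  - pose proof (site_dist_le_window_dist O a b a' b' n). pose proof (window_dist_ge0 O a b a' b' n).
    pose proof (Rmax_r M 1). pose proof (Cmod_ge_0 (Cminus (b n) (b' n))). unfold site_dist in *. nra.
Qed.

Lemma is_local_snd : is_local (fun a b => b).
Proof.
  exists O. intros M. exists (Rmax M 1). intros a b a' b' Ha Hb Ha' Hb' n. split.
  - eapply Rle_trans; [apply Hb|apply Rmax_l].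
  - pose proof (site_dist_le_window_dist O a b a' b' n). pose proof (window_dist_ge0 O a b a' b' n).
    pose proof (Rmax_r M 1). pose proof (Cmod_ge_0 (Cminus (a n) (a' n))). unfold site_dist in *. nra.
Qed.

Lemma is_local_shift_succ F : is_local F -> is_local (fun a b n => F a b (n + 1)%Z).
Proof.
  intros [K HK]. exists (S K). intros M. destruct (HK M) as [L HL]. exists (Rmax L 0).
  intros a b a' b' Ha Hb Ha' Hb' n. destruct (HL a b a' b' Ha Hb Ha' Hb' (n + 1)%Z) as [H1 H2].
  pose proof (window_dist_shift_succ K a b a' b' n). pose proof (window_dist_ge0 K a b a' b' (n + 1)).
  pose proof (Rmax_l L 0). pose proof (Rmax_r L 0). split; nra.
Qed.

Lemma is_local_shift_pred F : is_local F -> is_local (fun a b n => F a b (n - 1)%Z).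
Proof.
  intros [K HK]. exists (S K). intros M. destruct (HK M) as [L HL]. exists (Rmax L 0).
  intros a b a' b' Ha Hb Ha' Hb' n. destruct (HL a b a' b' Ha Hb Ha' Hb' (n - 1)%Z) as [H1 H2].
  pose proof (window_dist_shift_pred K a b a' b' n). pose proof (window_dist_ge0 K a b a' b' (n - 1)).
  pose proof (Rmax_l L 0). pose proof (Rmax_r L 0). split; nra.
Qed.

Lemma is_local_plus F G : is_local F -> is_local G -> is_local (fun a b n => Cplus (F a b n) (G a b n)).
Proof.
  intros [K1 H1] [K2 H2]. exists (max K1 K2). intros M.
  destruct (H1 M) as [L1 HL1], (H2 M) as [L2 HL2]. exists (L1 + L2).
  intros a b a' b' Ha Hb Ha' Hb' n.
  destruct (HL1 a b a' b' Ha Hb Ha' Hb' n) as [A1 B1], (HL2 a b a' b' Ha Hb Ha' Hb' n) as [A2 B2].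
  pose proof (window_dist_widen K1 (max K1 K2) a b a' b' n ltac:(lia)).
  pose proof (window_dist_widen K2 (max K1 K2) a b a' b' n ltac:(lia)).
  pose proof (window_dist_ge0 K1 a b a' b' n). pose proof (window_dist_ge0 K2 a b a' b' n).
  pose proof (Cmod_ge_0 (F a b n)). pose proof (Cmod_ge_0 (G a b n)).
  split; [eapply Rle_trans; [apply Cmod_triangle|lra]|].
  replace (Cminus (Cplus (F a b n) (G a b n)) (Cplus (F a' b' n) (G a' b' n)))
    with (Cplus (Cminus (F a b n) (F a' b' n)) (Cminus (G a b n) (G a' b' n))) by complex_ring.
  eapply Rle_trans; [apply Cmod_triangle|nra].
Qed.

Lemma Cmod_Copp_minus (x y : C) : Cmod (Cminus (Copp x) (Copp y)) = Cmod (Cminus x y).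
Proof. replace (Cminus (Copp x) (Copp y)) with (Copp (Cminus x y)) by complex_ring. apply Cmod_opp. Qed.

Lemma is_local_opp F : is_local F -> is_local (fun a b n => Copp (F a b n)).
Proof.
  intros [K H]. exists K. intros M. destruct (H M) as [L HL]. exists L.
  intros a b a' b' Ha Hb Ha' Hb' n. rewrite Cmod_opp, Cmod_Copp_minus. auto.
Qed.

Lemma is_local_minus F G : is_local F -> is_local G -> is_local (fun a b n => Cminus (F a b n) (G a b n)).
Proof. intros. apply is_local_plus, is_local_opp; auto. Qed.

Lemma is_local_mult F G : is_local F -> is_local G -> is_local (fun a b n => Cmult (F a b n) (G a b n)).
Proof.
  intros [K1 H1] [K2 H2]. exists (max K1 K2). intros M.
  destruct (Rle_dec 0 M) as [HM|HM].
  2:{ exists 0. intros a b a' b' Ha. pose proof (Ha 0%Z). pose proof (Cmod_ge_0 (a 0%Z)). lra. }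
  destruct (H1 M) as [L1 HL1], (H2 M) as [L2 HL2]. exists (2 * L1 * L2).
  pose proof (local_with_ge0 _ _ _ _ HL1 HM). pose proof (local_with_ge0 _ _ _ _ HL2 HM).
  intros a b a' b' Ha Hb Ha' Hb' n.
  destruct (HL1 a b a' b' Ha Hb Ha' Hb' n) as [A1 B1], (HL2 a b a' b' Ha Hb Ha' Hb' n) as [A2 B2].
  destruct (HL2 a' b' a' b' Ha' Hb' Ha' Hb' n) as [A2' _].
  pose proof (window_dist_widen K1 (max K1 K2) a b a' b' n ltac:(lia)).
  pose proof (window_dist_widen K2 (max K1 K2) a b a' b' n ltac:(lia)).
  pose proof (window_dist_ge0 K1 a b a' b' n). pose proof (window_dist_ge0 K2 a b a' b' n).
  pose proof (Cmod_ge_0 (F a b n)). pose proof (Cmod_ge_0 (G a b n)). pose proof (Cmod_ge_0 (G a' b' n)).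
  pose proof (Cmod_ge_0 (Cminus (F a b n) (F a' b' n))). pose proof (Cmod_ge_0 (Cminus (G a b n) (G a' b' n))).
  split; [rewrite Cmod_mult; nra|].
  replace (Cminus (Cmult (F a b n) (G a b n)) (Cmult (F a' b' n) (G a' b' n)))
    with (Cplus (Cmult (F a b n) (Cminus (G a b n) (G a' b' n)))
                (Cmult (G a' b' n) (Cminus (F a b n) (F a' b' n)))) by complex_ring.
  eapply Rle_trans; [apply Cmod_triangle|]. rewrite !Cmod_mult.
  assert (E1 : Cmod (F a b n) * Cmod (Cminus (G a b n) (G a' b' n)) <= L1 * (L2 * window_dist (max K1 K2) a b a' b' n)).
  { apply Rmult_le_compat; nra. }
  assert (E2 : Cmod (G a' b' n) * Cmod (Cminus (F a b n) (F a' b' n)) <= L2 * (L1 * window_dist (max K1 K2) a b a' b' n)).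
  { apply Rmult_le_compat; nra. }
  nra.
Qed.

Lemma is_local_csum N (F : nat -> cseq -> cseq -> cseq) :
  (forall k, (k < N)%nat -> is_local (F k)) -> is_local (fun a b n => csum N (fun k => F k a b n)).
Proof.
  induction N as [|N IH]; intros H; simpl.
  - apply is_local_const.
  - apply (is_local_plus (fun a b n => csum N (fun k => F k a b n)) (F N)).
    + apply IH. intros; apply H; lia.
    + apply H; lia.
Qed.

Lemma csum_ext N F G : (forall k, (k < N)%nat -> F k = G k) -> csum N F = csum N G.
Proof.
  induction N as [|N IH]; simpl; intros H; [reflexivity|].
  rewrite IH by (intros; apply H; lia). rewrite H by lia. reflexivity.
Qed.

Lemma hats_length s a b l : length (hats s a b l) = S l.
Proof. induction l as [|l IH]; simpl; auto. rewrite length_app, IH. simpl. lia. Qed.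

Lemma hats_nth s a b l k : (k <= l)%nat -> nth k (hats s a b l) zero_trip = hat s a b k.
Proof.
  unfold hat. induction l as [|l IH]; intros Hk.
  - now replace k with O by lia.
  - destruct (Nat.eq_dec k (S l)) as [->|Ne]; [reflexivity|].
    simpl. rewrite app_nth1 by (rewrite hats_length; lia). apply IH. lia.
Qed.

Lemma hat_S s a b l : hat s a b (S l) = hat_next s a b l (hats s a b l).
Proof.
  unfold hat at 1. simpl. rewrite app_nth2 by (rewrite hats_length; lia).
  now rewrite hats_length, Nat.sub_diag.
Qed.

Definition hat_g_next s l (a b : cseq) (n : Z) : C :=
  Cminus (csum (S l) (fun k => Cmult (tf (hat s a b (l - k)%nat) n) (th (hat s a b k) n)))
         (csum l (fun k => Cmult (tg (hat s a b (l - k)%nat) n) (tg (hat s a b (S k)) n))).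

Lemma hat_next_g s a b l n : tg (hat_next s a b l (hats s a b l)) n = hat_g_next s l a b n.
Proof.
  assert (E : Cminus
     (csum (S l) (fun k => Cmult (tf (nth (l - k)%nat (hats s a b l) zero_trip) n)
                                 (th (nth k (hats s a b l) zero_trip) n)))
     (csum l (fun k => Cmult (tg (nth (l - k)%nat (hats s a b l) zero_trip) n)
                             (tg (nth (S k) (hats s a b l) zero_trip) n)))
     = hat_g_next s l a b n).
  { unfold hat_g_next. f_equal; apply csum_ext; intros k Hk; rewrite !hats_nth by lia; reflexivity. }
  destruct s; exact E.
Qed.

Lemma hat_g_S s a b l n : tg (hat s a b (S l)) n = hat_g_next s l a b n.
Proof. rewrite hat_S. apply hat_next_g. Qed.

Lemma hat_f_S_Pl a b l n : tf (hat Pl a b (S l)) n =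
  Cminus (tf (hat Pl a b l) (n + 1)%Z)
         (Cmult (a (n + 1)%Z) (Cplus (hat_g_next Pl l a b (n + 1)%Z) (hat_g_next Pl l a b n))).
Proof. rewrite hat_S, <- !hat_next_g, <- (hats_nth _ a b l l) by lia. reflexivity. Qed.

Lemma hat_h_S_Pl a b l n : th (hat Pl a b (S l)) n =
  Cplus (th (hat Pl a b l) (n - 1)%Z)
        (Cmult (b n) (Cplus (hat_g_next Pl l a b n) (hat_g_next Pl l a b (n - 1)%Z))).
Proof. rewrite hat_S, <- !hat_next_g, <- (hats_nth _ a b l l) by lia. reflexivity. Qed.

Lemma hat_f_S_Mi a b l n : tf (hat Mi a b (S l)) n =
  Cplus (tf (hat Mi a b l) (n - 1)%Z)
        (Cmult (a n) (Cplus (hat_g_next Mi l a b n) (hat_g_next Mi l a b (n - 1)%Z))).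
Proof. rewrite hat_S, <- !hat_next_g, <- (hats_nth _ a b l l) by lia. reflexivity. Qed.

Lemma hat_h_S_Mi a b l n : th (hat Mi a b (S l)) n =
  Cminus (th (hat Mi a b l) (n + 1)%Z)
         (Cmult (b (n + 1)%Z) (Cplus (hat_g_next Mi l a b (n + 1)%Z) (hat_g_next Mi l a b n))).
Proof. rewrite hat_S, <- !hat_next_g, <- (hats_nth _ a b l l) by lia. reflexivity. Qed.

Definition is_local_trip (x : cseq -> cseq -> trip) : Prop :=
  is_local (fun a b => tf (x a b)) /\ is_local (fun a b => tg (x a b)) /\
  is_local (fun a b => th (x a b)).

Lemma is_local_hat0 s : is_local_trip (hat0 s).
Proof.
  pose proof (is_local_shift_succ _ is_local_fst) as Ha.
  pose proof (is_local_shift_succ _ is_local_snd) as Hb.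
  destruct s; repeat split; simpl;
    solve [apply is_local_fst | apply is_local_snd | apply (is_local_const (RtoC (1/2)))
          | apply (is_local_opp _ Ha) | apply (is_local_opp _ Hb)].
Qed.

Lemma is_local_hat_g_next s l :
  (forall k, (k <= l)%nat -> is_local_trip (fun a b => hat s a b k)) ->
  is_local (hat_g_next s l).
Proof.
  intros IH. unfold hat_g_next. apply is_local_minus.
  - apply (is_local_csum (S l) (fun k a b n => Cmult (tf (hat s a b (l - k)%nat) n) (th (hat s a b k) n))).
    intros k Hk. apply is_local_mult; [apply (IH (l - k)%nat)|apply (IH k)]; lia.
  - apply (is_local_csum l (fun k a b n => Cmult (tg (hat s a b (l - k)%nat) n) (tg (hat s a b (S k)) n))).
    intros k Hk. apply is_local_mult; [apply (IH (l - k)%nat)|apply (IH (S k))]; lia.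
Qed.

Lemma is_local_hat s k : is_local_trip (fun a b => hat s a b k).
Proof.
  enough (H : forall l k, (k <= l)%nat -> is_local_trip (fun a b => hat s a b k)) by now apply (H k).
  clear k. induction l as [|l IH]; intros k Hk.
  { replace k with O by lia. apply is_local_hat0. }
  destruct (Nat.eq_dec k (S l)) as [->|Ne]; [|apply IH; lia].
  pose proof (is_local_hat_g_next s l IH) as Hg.
  pose proof (is_local_shift_succ _ Hg) as Hg_succ. pose proof (is_local_shift_pred _ Hg) as Hg_pred.
  destruct (IH l (le_n l)) as [Hf [_ Hh]].
  pose proof (is_local_shift_succ _ is_local_fst) as Ha_succ.
  pose proof (is_local_shift_succ _ is_local_snd) as Hb_succ.
  split; [|split].
  - destruct s; eapply is_local_ext;
      [| intros a b n; symmetry; apply hat_f_S_Pl | | intros a b n; symmetry; apply hat_f_S_Mi].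
    + apply is_local_minus; [apply (is_local_shift_succ _ Hf)|].
      apply (is_local_mult _ _ Ha_succ). apply (is_local_plus _ _ Hg_succ Hg).
    + apply is_local_plus; [apply (is_local_shift_pred _ Hf)|].
      apply (is_local_mult _ _ is_local_fst). apply (is_local_plus _ _ Hg Hg_pred).
  - eapply is_local_ext; [exact Hg|]. intros a b n. symmetry. apply hat_g_S.
  - destruct s; eapply is_local_ext;
      [| intros a b n; symmetry; apply hat_h_S_Pl | | intros a b n; symmetry; apply hat_h_S_Mi].
    + apply is_local_plus; [apply (is_local_shift_pred _ Hh)|].
      apply (is_local_mult _ _ is_local_snd). apply (is_local_plus _ _ Hg Hg_pred).
    + apply is_local_minus; [apply (is_local_shift_succ _ Hh)|].
      apply (is_local_mult _ _ Hb_succ). apply (is_local_plus _ _ Hg_succ Hg).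
Qed.

Lemma is_local_comb (c : nat -> C) l (X : nat -> cseq -> cseq -> cseq) :
  (forall k, is_local (X k)) ->
  is_local (fun a b n => csum (S l) (fun k => Cmult (c (l - k)%nat) (X k a b n))).
Proof.
  intros HX. apply (is_local_csum (S l) (fun k a b n => Cmult (c (l - k)%nat) (X k a b n))).
  intros k _. apply (is_local_mult (fun _ _ _ => c (l - k)%nat)); [apply is_local_const|apply HX].
Qed.

Lemma is_local_coefF s c l : is_local (fun a b => coefF s c a b l).
Proof. apply (is_local_comb c l (fun k a b => tf (hat s a b k))). intros k. apply is_local_hat. Qed.

Lemma is_local_coefG s c l : is_local (fun a b => coefG s c a b l).
Proof. apply (is_local_comb c l (fun k a b => tg (hat s a b k))). intros k. apply is_local_hat. Qed.

Lemma is_local_coefH s c l : is_local (fun a b => coefH s c a b l).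
Proof. apply (is_local_comb c l (fun k a b => th (hat s a b k))). intros k. apply is_local_hat. Qed.

Lemma is_local_coefF_pred s c l : is_local (fun a b => coefF_pred s c a b l).
Proof. destruct l; [apply (is_local_const (RtoC 0))|apply is_local_coefF]. Qed.

Lemma is_local_coefH_pred s c l : is_local (fun a b => coefH_pred s c a b l).
Proof. destruct l; [apply (is_local_const (RtoC 0))|apply is_local_coefH]. Qed.

(* [AL_alpha] without its [-i alpha_t] term, so that a solution has
   [alpha_t = -i AL_alpha_rhs]; likewise for [beta]. *)
Definition AL_alpha_rhs rm rp cp cm (a b : cseq) : cseq := AL_alpha rm rp cp cm a b zero_seq.
Definition AL_beta_rhs rm rp cp cm (a b : cseq) : cseq := AL_beta rm rp cp cm a b zero_seq.

Lemma is_local_AL_alpha_rhs rm rp cp cm : is_local (AL_alpha_rhs rm rp cp cm).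
Proof.
  unfold AL_alpha_rhs, AL_alpha.
  apply is_local_minus; [|apply (is_local_shift_pred (fun a b => coefF_pred Mi cm a b rm)), is_local_coefF_pred].
  apply is_local_plus; [|apply is_local_coefF_pred].
  apply is_local_minus; [apply (is_local_const (Copp (Cmult Ci (zero_seq 0%Z))))|].
  apply (is_local_mult _ _ is_local_fst).
  apply is_local_plus; [apply is_local_coefG|].
  apply (is_local_shift_pred (fun a b => coefG Mi cm a b rm)), is_local_coefG.
Qed.

Lemma is_local_AL_beta_rhs rm rp cp cm : is_local (AL_beta_rhs rm rp cp cm).
Proof.
  unfold AL_beta_rhs, AL_beta.
  apply is_local_plus; [|apply (is_local_shift_pred (fun a b => coefH_pred Pl cp a b rp)), is_local_coefH_pred].
  apply is_local_minus; [|apply is_local_coefH_pred].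
  apply is_local_plus; [apply (is_local_const (Copp (Cmult Ci (zero_seq 0%Z))))|].
  apply (is_local_mult _ _ is_local_snd).
  apply is_local_plus; [|apply is_local_coefG].
  apply (is_local_shift_pred (fun a b => coefG Pl cp a b rp)), is_local_coefG.
Qed.

Lemma AL_alpha_derivative rm rp cp cm a b da n :
  AL_alpha rm rp cp cm a b da n = RtoC 0 ->
  da n = Copp (Cmult Ci (AL_alpha_rhs rm rp cp cm a b n)).
Proof.
  unfold AL_alpha_rhs, AL_alpha, zero_seq. generalize (da n). intros x H.
  destruct x. revert H. unfold Cminus, Cplus, Copp, Cmult, RtoC, Ci. simpl.
  intros H. injection H. intros. f_equal; lra.
Qed.

Lemma AL_beta_derivative rm rp cp cm a b db n :
  AL_beta rm rp cp cm a b db n = RtoC 0 ->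
  db n = Copp (Cmult Ci (AL_beta_rhs rm rp cp cm a b n)).
Proof.
  unfold AL_beta_rhs, AL_beta, zero_seq. generalize (db n). intros x H.
  destruct x. revert H. unfold Cminus, Cplus, Copp, Cmult, RtoC, Ci. simpl.
  intros H. injection H. intros. f_equal; lra.
Qed.

(** * Weighted sums of local inequalities *)

Lemma abspow_ge0 x q : 0 <= abspow x q.
Proof. unfold abspow. destruct Req_EM_T; [lra|]. left; apply exp_pos. Qed.

Lemma abspow_0 q : abspow 0 q = 0.
Proof. unfold abspow. destruct Req_EM_T; lra. Qed.

Lemma abspow_Rpower x q : 0 < x -> abspow x q = Rpower x q.
Proof. intros H. unfold abspow. destruct Req_EM_T; [lra|]. now rewrite Rabs_right by lra. Qed.

Lemma abspow_le q x y : 0 <= q -> 0 <= x <= y -> abspow x q <= abspow y q.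
Proof.
  intros Hq [[H0|<-] H1].
  - rewrite !abspow_Rpower by lra. apply Rle_Rpower_l; lra.
  - rewrite abspow_0. apply abspow_ge0.
Qed.

Lemma abspow_mult q x y : 0 <= x -> 0 <= y -> abspow (x * y) q = abspow x q * abspow y q.
Proof.
  intros [Hx|<-] [Hy|<-]; rewrite ?Rmult_0_l, ?Rmult_0_r, ?abspow_0; try ring.
  rewrite !abspow_Rpower by nra. symmetry. now apply Rpower_mult_distr.
Qed.

Lemma abspow_le_id q x : 1 <= q -> 0 <= x <= 1 -> abspow x q <= x.
Proof.
  intros Hq [[H0|<-] H1]; [|rewrite abspow_0; lra].
  rewrite abspow_Rpower by lra.
  replace q with (1 + (q - 1)) by ring. rewrite Rpower_plus, Rpower_1 by lra.
  assert (Hln : ln x <= 0) by (rewrite <- ln_1; apply ln_le; lra).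
  assert (Rpower x (q - 1) <= 1).
  { unfold Rpower. rewrite <- exp_0 at 2.
    destruct (Req_dec ((q - 1) * ln x) 0) as [->|E]; [lra|].
    apply Rlt_le, exp_increasing. nra. }
  nra.
Qed.

Lemma abspow_Rmax q x y : abspow (Rmax x y) q <= abspow x q + abspow y q.
Proof.
  pose proof (abspow_ge0 x q). pose proof (abspow_ge0 y q).
  unfold Rmax. destruct Rle_dec; lra.
Qed.

Lemma abspow_plus_le q x y : 0 <= q -> 0 <= x -> 0 <= y ->
  abspow (x + y) q <= abspow 2 q * (abspow x q + abspow y q).
Proof.
  intros Hq Hx Hy. pose proof (Rmax_l x y). pose proof (Rmax_r x y).
  eapply Rle_trans; [apply (abspow_le q _ (2 * Rmax x y)); lra|].
  rewrite abspow_mult by lra.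
  apply Rmult_le_compat_l; [apply abspow_ge0|apply abspow_Rmax].
Qed.

Lemma abspow_plus3_le q x y z : 0 <= q -> 0 <= x -> 0 <= y -> 0 <= z ->
  abspow (x + y + z) q <= abspow 3 q * (abspow x q + abspow y q + abspow z q).
Proof.
  intros Hq Hx Hy Hz.
  pose proof (Rmax_l x (Rmax y z)). pose proof (Rmax_r x (Rmax y z)).
  pose proof (Rmax_l y z). pose proof (Rmax_r y z).
  eapply Rle_trans; [apply (abspow_le q _ (3 * Rmax x (Rmax y z))); lra|].
  rewrite abspow_mult by lra. apply Rmult_le_compat_l; [apply abspow_ge0|].
  pose proof (abspow_Rmax q x (Rmax y z)). pose proof (abspow_Rmax q y z). lra.
Qed.

Lemma abspow_plus_ge q x y : 0 <= q -> 0 <= x -> 0 <= y ->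
  abspow x q + abspow y q <= 2 * abspow (x + y) q.
Proof.
  intros Hq Hx Hy. pose proof (abspow_le q x (x + y) Hq ltac:(lra)).
  pose proof (abspow_le q y (x + y) Hq ltac:(lra)). lra.
Qed.

Fixpoint max_sym (N : nat) (f : Z -> R) : R :=
  match N with
  | O => f 0%Z
  | S N' => Rmax (Rmax (max_sym N' f) (f (Z.of_nat N))) (f (- Z.of_nat N)%Z)
  end.

Lemma max_sym_ge0 N f : (forall j, 0 <= f j) -> 0 <= max_sym N f.
Proof.
  intros H. induction N as [|N IH]; simpl; [apply H|].
  eapply Rle_trans; [|apply Rmax_l]. eapply Rle_trans; [|apply Rmax_l]. exact IH.
Qed.

Lemma sum_sym_le_max_sym N f : sum_sym N f <= (2 * INR N + 1) * max_sym N f.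
Proof.
  induction N as [|N IH]; [simpl; lra|].
  cbn [sum_sym max_sym]. rewrite S_INR.
  set (m0 := max_sym N f) in *. set (u := f (Z.of_nat (S N))). set (v := f (- Z.of_nat (S N))%Z).
  pose proof (Rmax_l (Rmax m0 u) v). pose proof (Rmax_r (Rmax m0 u) v).
  pose proof (Rmax_l m0 u). pose proof (Rmax_r m0 u). pose proof (pos_INR N).
  set (m := Rmax (Rmax m0 u) v) in *.
  assert ((2 * INR N + 1) * m0 <= (2 * INR N + 1) * m) by (apply Rmult_le_compat_l; lra).
  nra.
Qed.

Lemma abspow_max_sym_le q N f : abspow (max_sym N f) q <= sum_sym N (fun j => abspow (f j) q).
Proof.
  induction N as [|N IH]; [simpl; lra|]. cbn [sum_sym max_sym].
  pose proof (abspow_Rmax q (Rmax (max_sym N f) (f (Z.of_nat (S N)))) (f (- Z.of_nat (S N))%Z)).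
  pose proof (abspow_Rmax q (max_sym N f) (f (Z.of_nat (S N)))). lra.
Qed.

Lemma abspow_sum_sym_le q N f : 0 <= q -> (forall j, 0 <= f j) ->
  abspow (sum_sym N f) q <= abspow (2 * INR N + 1) q * sum_sym N (fun j => abspow (f j) q).
Proof.
  intros Hq H. pose proof (pos_INR N). pose proof (max_sym_ge0 N f H).
  eapply Rle_trans.
  { apply abspow_le; [exact Hq|]. split; [apply sum_sym_ge0; auto|apply sum_sym_le_max_sym]. }
  rewrite abspow_mult by lra.
  apply Rmult_le_compat_l; [apply abspow_ge0|apply abspow_max_sym_le].
Qed.

Definition shift_comparable (C : R) (v : Z -> R) : Prop :=
  forall n, 0 <= v n /\ v n <= C * v (n + 1)%Z /\ v n <= C * v (n - 1)%Z.

Lemma shift_comparable_pow C v m j n :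
  1 <= C -> shift_comparable C v -> (Z.abs j <= Z.of_nat m)%Z -> v n <= C ^ m * v (n + j)%Z.
Proof.
  intros HC Hv. revert j. induction m as [|m IH]; intros j Hj.
  { replace j with 0%Z by lia. rewrite Z.add_0_r. simpl. lra. }
  assert (1 <= C ^ m) by (apply pow_R1_Rle; lra). simpl.
  destruct (Z.eq_dec j 0) as [->|Hj0].
  - rewrite Z.add_0_r. pose proof (proj1 (Hv n)). assert (1 <= C * C ^ m) by nra. nra.
  - destruct (Z_lt_le_dec 0 j).
    + pose proof (IH (j - 1)%Z ltac:(lia)). destruct (Hv (n + (j - 1))%Z) as (_ & H1 & _).
      replace (n + (j - 1) + 1)%Z with (n + j)%Z in H1 by lia. nra.
    + pose proof (IH (j + 1)%Z ltac:(lia)). destruct (Hv (n + (j + 1))%Z) as (_ & _ & H1).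
      replace (n + (j + 1) - 1)%Z with (n + j)%Z in H1 by lia. nra.
Qed.

Lemma window_weighted_sum_le C v h K N :
  1 <= C -> shift_comparable C v -> (forall x, 0 <= h x) ->
  sum_sym N (fun n => v n * sum_sym K (fun j => h (n + j)%Z)) <=
  (2 * INR K + 1) * C ^ K * sum_sym (N + K) (fun n => v n * h n).
Proof.
  intros HC Hv Hh.
  assert (HCK : 0 <= C ^ K) by (apply pow_le; lra).
  rewrite (sum_sym_ext N _ (fun n => sum_sym K (fun j => v n * h (n + j)%Z)))
    by (intros; now rewrite sum_sym_scal).
  rewrite sum_sym_swap.
  eapply Rle_trans.
  - apply (sum_sym_le _ _ (fun _ => C ^ K * sum_sym (N + K) (fun n => v n * h n))).
    intros j Hj. eapply Rle_trans.
    + apply (sum_sym_le _ _ (fun n => C ^ K * (v (n + j)%Z * h (n + j)%Z))).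
      intros n _. rewrite <- Rmult_assoc. apply Rmult_le_compat_r; [apply Hh|].
      now apply shift_comparable_pow.
    + rewrite sum_sym_scal. apply Rmult_le_compat_l; [exact HCK|].
      apply (sum_sym_shift_le (fun x => v x * h x)); [|exact Hj].
      intros x. apply Rmult_le_pos; [apply Hv|apply Hh].
  - rewrite sum_sym_const. lra.
Qed.

Lemma window_weighted_le_sup C v h K n Y :
  1 <= C -> shift_comparable C v -> (forall x, 0 <= h x) -> (forall m, v m * h m <= Y) ->
  v n * sum_sym K (fun j => h (n + j)%Z) <= (2 * INR K + 1) * C ^ K * Y.
Proof.
  intros HC Hv Hh HY. rewrite <- sum_sym_scal. eapply Rle_trans.
  - apply (sum_sym_le _ _ (fun _ => C ^ K * Y)). intros j Hj.
    pose proof (shift_comparable_pow C v K j n HC Hv Hj).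
    pose proof (HY (n + j)%Z). pose proof (Hh (n + j)%Z).
    assert (0 <= C ^ K) by (apply pow_le; lra). nra.
  - rewrite sum_sym_const. lra.
Qed.

(* Truncating the weight by a geometric sequence makes all weighted sums of bounded
   sequences finite, which the affine self-bound argument needs. *)
Definition trunc_weight (w : Z -> R) (R0 : R) (n : Z) : R :=
  Rmin (w n) (R0 * (/ 2) ^ Z.abs_nat n).

Lemma trunc_weight_le w R0 n : trunc_weight w R0 n <= w n.
Proof. apply Rmin_l. Qed.

Lemma trunc_weight_le_geom w R0 n : trunc_weight w R0 n <= R0 * (/ 2) ^ Z.abs_nat n.
Proof. apply Rmin_r. Qed.

Lemma half_pow_le k k' : (k' <= k)%nat -> (/ 2) ^ k <= (/ 2) ^ k'.
Proof.
  intros H. replace k with (k' + (k - k'))%nat by lia. rewrite pow_add.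
  assert (0 <= (/ 2) ^ k') by (apply pow_le; lra).
  assert ((/ 2) ^ (k - k') <= 1) by (rewrite <- (pow1 (k - k')); apply pow_incr; lra).
  nra.
Qed.

Lemma trunc_weight_shift_comparable C w R0 :
  0 <= R0 -> shift_comparable C w -> shift_comparable (Rmax C 2) (trunc_weight w R0).
Proof.
  intros HR Hw n. unfold trunc_weight.
  pose proof (Rmax_l C 2). pose proof (Rmax_r C 2).
  assert (Hgeom : forall m, (Z.abs_nat m <= S (Z.abs_nat n))%nat ->
            R0 * (/ 2) ^ Z.abs_nat n <= Rmax C 2 * (R0 * (/ 2) ^ Z.abs_nat m)).
  { intros m Hm. pose proof (half_pow_le (S (Z.abs_nat n)) _ Hm) as Hp. simpl in Hp.
    assert (0 <= (/ 2) ^ Z.abs_nat n) by (apply pow_le; lra).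
    assert (0 <= R0 * (/ 2) ^ Z.abs_nat m) by (apply Rmult_le_pos; [lra|apply pow_le; lra]).
    apply (Rmult_le_compat_l R0) in Hp; [|exact HR].
    assert (2 * (R0 * (/ 2) ^ Z.abs_nat m) <= Rmax C 2 * (R0 * (/ 2) ^ Z.abs_nat m))
      by (apply Rmult_le_compat_r; lra).
    lra. }
  assert (Hmin : forall x y x' y', x <= Rmax C 2 * x' -> y <= Rmax C 2 * y' ->
            Rmin x y <= Rmax C 2 * Rmin x' y').
  { intros x y x' y' ? ?. unfold Rmin at 2. destruct Rle_dec.
    - eapply Rle_trans; [apply Rmin_l|auto].
    - eapply Rle_trans; [apply Rmin_r|auto]. }
  destruct (Hw n) as (Hn & Hsucc & Hpred), (Hw (n + 1)%Z) as (Hn1 & _), (Hw (n - 1)%Z) as (Hn2 & _).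
  assert (0 <= R0 * (/ 2) ^ Z.abs_nat n) by (apply Rmult_le_pos; [lra|apply pow_le; lra]).
  split; [apply Rmin_glb; auto|split; apply Hmin; try (apply Hgeom; lia)].
  all: nra.
Qed.

Lemma sum_sym_half_pow N : sum_sym N (fun n => (/ 2) ^ Z.abs_nat n) = 3 - 2 * (/ 2) ^ N.
Proof.
  induction N as [|N IH]; [simpl; lra|].
  rewrite sum_sym_S, IH.
  replace (Z.abs_nat (Z.of_nat N + 1)) with (S N) by lia.
  replace (Z.abs_nat (- (Z.of_nat N + 1))) with (S N) by lia.
  simpl. field.
Qed.

Lemma trunc_weight_sum_le w R0 N : 0 <= R0 -> sum_sym N (trunc_weight w R0) <= 3 * R0.
Proof.
  intros HR. eapply Rle_trans.
  { apply (sum_sym_le _ _ (fun n => R0 * (/ 2) ^ Z.abs_nat n)). intros; apply trunc_weight_le_geom. }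
  rewrite sum_sym_scal, sum_sym_half_pow.
  assert (0 <= (/ 2) ^ N) by (apply pow_le; lra). nra.
Qed.

Lemma trunc_weight_eq w R0 n : w n * 2 ^ Z.abs_nat n <= R0 -> trunc_weight w R0 n = w n.
Proof.
  intros H. unfold trunc_weight. apply Rmin_left.
  assert (E : 2 ^ Z.abs_nat n * (/ 2) ^ Z.abs_nat n = 1)
    by (rewrite <- Rpow_mult_distr, Rinv_r, pow1; lra).
  assert (0 <= (/ 2) ^ Z.abs_nat n) by (apply pow_le; lra).
  apply (Rmult_le_compat_r ((/ 2) ^ Z.abs_nat n)) in H; [|assumption].
  rewrite Rmult_assoc, E in H. lra.
Qed.

Lemma trunc_weight_ge0 w R0 n : 0 <= w n -> 0 <= R0 -> 0 <= trunc_weight w R0 n.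
Proof.
  intros Hw HR. apply Rmin_glb; [exact Hw|]. apply Rmult_le_pos; [exact HR|apply pow_le; lra].
Qed.

Lemma trunc_weight_le_R0 w R0 n : 0 <= R0 -> trunc_weight w R0 n <= R0.
Proof.
  intros HR. eapply Rle_trans; [apply trunc_weight_le_geom|].
  pose proof (half_pow_le (Z.abs_nat n) 0 ltac:(lia)). simpl in H. nra.
Qed.

Lemma sum_sym_trunc_weight_le w R0 h H N :
  0 <= R0 -> (forall n, 0 <= w n) -> (forall n, 0 <= h n <= H) ->
  sum_sym N (fun n => trunc_weight w R0 n * h n) <= H * (3 * R0).
Proof.
  intros HR Hw Hh. eapply Rle_trans.
  - apply (sum_sym_le _ _ (fun n => H * trunc_weight w R0 n)). intros n _.
    rewrite Rmult_comm. apply Rmult_le_compat_r; [now apply trunc_weight_ge0|apply Hh].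
  - rewrite sum_sym_scal. apply Rmult_le_compat_l; [pose proof (Hh 0%Z); lra|].
    now apply trunc_weight_sum_le.
Qed.

Lemma sum_sym_trunc_weight_eq w h N :
  (forall n, 0 <= w n) ->
  sum_sym N (fun n => w n * h n) =
  sum_sym N (fun n => trunc_weight w (sum_sym N (fun m => w m * 2 ^ Z.abs_nat m)) n * h n).
Proof.
  intros Hw. apply sum_sym_ext. intros n Hn. rewrite trunc_weight_eq; [reflexivity|].
  apply (sum_sym_term_le N (fun m => w m * 2 ^ Z.abs_nat m)); auto.
  intros; apply Rmult_le_pos; [apply Hw|apply pow_le; lra].
Qed.

(* Apply the hypothesis to the least upper bound [m]: [m <= A + c m] forces [m <= 2 A]. *)
Lemma le_twice_of_affine_self_bound (P : R -> Prop) A c :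
  0 <= A -> 0 <= c <= 1/2 ->
  (exists x, P x) -> (exists Y, forall x, P x -> x <= Y) ->
  (forall Y, (forall x, P x -> x <= Y) -> forall x, P x -> x <= A + c * Y) ->
  forall x, P x -> x <= 2 * A.
Proof.
  intros HA Hc Hne [Y HY] H.
  destruct (completeness P (ex_intro _ Y HY) Hne) as [m [Hub Hlub]].
  assert (m <= A + c * m) by (apply Hlub; intros x Hx; now apply H).
  intros x Hx. pose proof (Hub x Hx). nra.
Qed.

Definition window_const (K : nat) (C : R) : R := (2 * INR K + 1) * Rmax C 2 ^ K.

Lemma window_const_ge1 K C : 1 <= window_const K C.
Proof.
  unfold window_const. pose proof (pos_INR K).
  assert (1 <= Rmax C 2 ^ K) by (apply pow_R1_Rle; pose proof (Rmax_r C 2); lra). nra.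
Qed.

Section LocalInequality.

Variables (w : Z -> R) (Cw : R) (K K0 : nat) (S D e : Z -> R) (a B : R).
Hypothesis Hw : shift_comparable Cw w.
Hypothesis Ha : 0 <= a <= 1.
Hypothesis HS : forall n, 0 <= S n <= B.
Hypothesis HD : forall n, 0 <= D n.
Hypothesis He : forall n, 0 <= e n.
Hypothesis He_supp : forall n, (Z.of_nat K0 < Z.abs n)%Z -> e n = 0.
Hypothesis Hineq : forall n, S n <= D n + a * sum_sym K (fun j => S (n + j)%Z) + e n.

Lemma abspow_local_ineq q n : 1 <= q ->
  abspow (S n) q <= abspow 3 q * (abspow (D n) q +
    a * abspow (2 * INR K + 1) q * sum_sym K (fun j => abspow (S (n + j)%Z) q) + abspow (e n) q).
Proof.
  intros Hq.
  assert (HSsum : 0 <= sum_sym K (fun j => S (n + j)%Z)) by (apply sum_sym_ge0; intros; apply HS).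
  assert (HSq : 0 <= sum_sym K (fun j => abspow (S (n + j)%Z) q))
    by (apply sum_sym_ge0; intros; apply abspow_ge0).
  eapply Rle_trans.
  { apply (abspow_le q _ (D n + a * sum_sym K (fun j => S (n + j)%Z) + e n)); [lra|].
    split; [apply HS|apply Hineq]. }
  eapply Rle_trans; [apply abspow_plus3_le; auto; try lra; apply Rmult_le_pos; lra|].
  apply Rmult_le_compat_l; [apply abspow_ge0|].
  rewrite abspow_mult by lra.
  pose proof (abspow_le_id q a Hq Ha).
  pose proof (abspow_sum_sym_le q K (fun j => S (n + j)%Z) ltac:(lra) (fun j => proj1 (HS (n + j)%Z))).
  pose proof (abspow_ge0 (sum_sym K (fun j => S (n + j)%Z)) q).
  pose proof (abspow_ge0 (2 * INR K + 1) q).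
  assert (abspow a q * abspow (sum_sym K (fun j => S (n + j)%Z)) q <=
          a * (abspow (2 * INR K + 1) q * sum_sym K (fun j => abspow (S (n + j)%Z) q)))
    by (apply Rmult_le_compat; auto; apply abspow_ge0).
  lra.
Qed.

Lemma weighted_sum_center_le (v h : Z -> R) N :
  (forall n, 0 <= v n <= w n) -> (forall n, 0 <= h n) ->
  (forall n, (Z.of_nat K0 < Z.abs n)%Z -> h n = 0) ->
  sum_sym N (fun n => v n * h n) <= sum_sym K0 (fun n => w n * h n).
Proof.
  intros Hv Hh Hsupp. eapply Rle_trans.
  - apply (sum_sym_le _ _ (fun n => w n * h n)). intros n _.
    apply Rmult_le_compat_r; [apply Hh|apply Hv].
  - apply sum_sym_support.
    + intros n. apply Rmult_le_pos; [apply Hw|apply Hh].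
    + intros n Hn. now rewrite Hsupp, Rmult_0_r.
Qed.

Lemma weighted_lq_affine_bound q v N :
  1 <= q -> shift_comparable (Rmax Cw 2) v -> (forall n, v n <= w n) ->
  sum_sym N (fun n => v n * abspow (S n) q) <=
  abspow 3 q * (sum_sym N (fun n => w n * abspow (D n) q) +
                sum_sym K0 (fun n => w n * abspow (e n) q)) +
  abspow 3 q * abspow (2 * INR K + 1) q * window_const K Cw * a *
    sum_sym (N + K) (fun n => v n * abspow (S n) q).
Proof.
  intros Hq Hv Hvw.
  pose proof (abspow_ge0 3 q) as H3. pose proof (abspow_ge0 (2 * INR K + 1) q) as Hk.
  assert (HSq : forall x, 0 <= abspow (S x) q) by (intros; apply abspow_ge0).
  eapply Rle_trans.
  { apply (sum_sym_le _ _ (fun n => abspow 3 q * (v n * abspow (D n) q) +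
             abspow 3 q * abspow (2 * INR K + 1) q * a *
               (v n * sum_sym K (fun j => abspow (S (n + j)%Z) q)) +
             abspow 3 q * (v n * abspow (e n) q))).
    intros n _. pose proof (abspow_local_ineq q n Hq). pose proof (proj1 (Hv n)).
    apply (Rmult_le_compat_l (v n)) in H; [|assumption]. nra. }
  rewrite !sum_sym_plus, !sum_sym_scal.
  assert (HDw : sum_sym N (fun n => v n * abspow (D n) q) <= sum_sym N (fun n => w n * abspow (D n) q)).
  { apply sum_sym_le. intros n _. apply Rmult_le_compat_r; [apply abspow_ge0|apply Hvw]. }
  assert (Hew : sum_sym N (fun n => v n * abspow (e n) q) <= sum_sym K0 (fun n => w n * abspow (e n) q)).
  { apply weighted_sum_center_le.
    - intros n. split; [apply Hv|apply Hvw].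
    - intros; apply abspow_ge0.
    - intros n Hn. now rewrite He_supp, abspow_0. }
  pose proof (window_weighted_sum_le (Rmax Cw 2) v (fun x => abspow (S x) q) K N
                (Rle_trans 1 2 _ ltac:(lra) (Rmax_r Cw 2)) Hv HSq) as Hwin.
  cbv beta in Hwin.
  assert (Hc : 0 <= abspow 3 q * abspow (2 * INR K + 1) q * a) by (apply Rmult_le_pos; nra).
  apply (Rmult_le_compat_l _ _ _ Hc) in Hwin.
  apply (Rmult_le_compat_l _ _ _ H3) in HDw. apply (Rmult_le_compat_l _ _ _ H3) in Hew.
  unfold window_const. lra.
Qed.

Lemma weighted_center_le (v : Z -> R) n :
  (forall n, 0 <= v n <= w n) -> v n * e n <= sum_sym K0 (fun m => w m * e m).
Proof.
  intros Hv. assert (Hwe : forall m, 0 <= w m * e m) by (intros; apply Rmult_le_pos; [apply Hw|apply He]).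
  destruct (Z_le_gt_dec (Z.abs n) (Z.of_nat K0)) as [Hn|Hn].
  - eapply Rle_trans; [apply Rmult_le_compat_r; [apply He|apply Hv]|].
    now apply (sum_sym_term_le K0 (fun m => w m * e m)).
  - rewrite He_supp, Rmult_0_r by lia. now apply sum_sym_ge0.
Qed.

Lemma weighted_lq_local_ineq q :
  1 <= q -> abspow 3 q * abspow (2 * INR K + 1) q * window_const K Cw * a <= 1/2 ->
  (exists B1, forall N, sum_sym N (fun n => w n * abspow (D n) q) <= B1) ->
  exists B2, forall N, sum_sym N (fun n => w n * abspow (S n) q) <= B2.
Proof.
  intros Hq Hc [B1 HB1].
  set (c := abspow 3 q * abspow (2 * INR K + 1) q * window_const K Cw * a) in Hc.
  set (A := abspow 3 q * (B1 + sum_sym K0 (fun n => w n * abspow (e n) q))).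
  assert (HA : 0 <= A).
  { pose proof (HB1 O). simpl in H. pose proof (proj1 (Hw 0%Z)). pose proof (abspow_ge0 (D 0%Z) q).
    assert (0 <= sum_sym K0 (fun n => w n * abspow (e n) q))
      by (apply sum_sym_ge0; intros; apply Rmult_le_pos; [apply Hw|apply abspow_ge0]).
    apply Rmult_le_pos; [apply abspow_ge0|nra]. }
  assert (Hc0 : 0 <= c).
  { pose proof (window_const_ge1 K Cw). pose proof (abspow_ge0 3 q).
    pose proof (abspow_ge0 (2 * INR K + 1) q). unfold c.
    apply Rmult_le_pos; [apply Rmult_le_pos; [apply Rmult_le_pos|]|]; lra. }
  exists (2 * A). intros N.
  rewrite (sum_sym_trunc_weight_eq w _ N (fun n => proj1 (Hw n))).
  set (R0 := sum_sym N (fun n => w n * 2 ^ Z.abs_nat n)).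
  assert (HR0 : 0 <= R0) by (apply sum_sym_ge0; intros; apply Rmult_le_pos; [apply Hw|apply pow_le; lra]).
  set (v := trunc_weight w R0).
  pose proof (trunc_weight_shift_comparable Cw w R0 HR0 Hw) as Hv.
  set (Phi := fun N' => sum_sym N' (fun n => v n * abspow (S n) q)).
  apply (le_twice_of_affine_self_bound (fun x => exists N', x = Phi N') A c); auto.
  - now exists (Phi O), O.
  - exists (abspow B q * (3 * R0)). intros x [N' ->].
    apply sum_sym_trunc_weight_le; [exact HR0|apply Hw|].
    intros n. split; [apply abspow_ge0|apply abspow_le; [lra|apply HS]].
  - intros Y HY x [N' ->].
    pose proof (weighted_lq_affine_bound q v N' Hq Hv (trunc_weight_le w R0)) as Haff.
    pose proof (HY (Phi (N' + K)%nat) (ex_intro _ _ eq_refl)).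
    assert (abspow 3 q * sum_sym N' (fun n => w n * abspow (D n) q) <= abspow 3 q * B1)
      by (apply Rmult_le_compat_l; [apply abspow_ge0|apply HB1]).
    assert (c * Phi (N' + K)%nat <= c * Y) by (apply Rmult_le_compat_l; auto).
    fold c in Haff. unfold A, Phi in *. lra.
  - now exists N.
Qed.

Lemma weighted_sup_local_ineq :
  window_const K Cw * a <= 1/2 ->
  (exists B1, forall n, w n * D n <= B1) -> exists B2, forall n, w n * S n <= B2.
Proof.
  intros Hc [B1 HB1].
  set (E0 := sum_sym K0 (fun m => w m * e m)).
  assert (HE0 : 0 <= E0) by (apply sum_sym_ge0; intros; apply Rmult_le_pos; [apply Hw|apply He]).
  assert (HB1p : 0 <= B1).
  { eapply Rle_trans; [|apply (HB1 0%Z)]. apply Rmult_le_pos; [apply Hw|apply HD]. }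
  pose proof (window_const_ge1 K Cw).
  exists (2 * (B1 + E0)). intros n0.
  set (R0 := w n0 * 2 ^ Z.abs_nat n0).
  assert (HR0 : 0 <= R0) by (apply Rmult_le_pos; [apply Hw|apply pow_le; lra]).
  set (v := trunc_weight w R0).
  pose proof (trunc_weight_shift_comparable Cw w R0 HR0 Hw) as Hv.
  replace (w n0) with (v n0) by (apply trunc_weight_eq; unfold R0; lra).
  apply (le_twice_of_affine_self_bound (fun x => exists n, x = v n * S n) (B1 + E0) (window_const K Cw * a));
    [lra|split; nra| | | |now exists n0].
  - now exists (v 0%Z * S 0%Z), 0%Z.
  - exists (R0 * B). intros x [n ->].
    apply Rmult_le_compat; [apply Hv|apply HS|now apply trunc_weight_le_R0|apply HS].
  - intros Y HY x [n ->].
    pose proof (window_weighted_le_sup (Rmax Cw 2) v S K n Y (Rle_trans 1 2 _ ltac:(lra) (Rmax_r Cw 2))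
                  Hv (fun m => proj1 (HS m)) (fun m => HY _ (ex_intro _ m eq_refl))) as Hwin.
    fold (window_const K Cw) in Hwin.
    assert (HvD : v n * D n <= B1).
    { eapply Rle_trans; [|apply (HB1 n)]. apply Rmult_le_compat_r; [apply HD|apply trunc_weight_le]. }
    pose proof (weighted_center_le v n (fun m => conj (proj1 (Hv m)) (trunc_weight_le w R0 m))).
    apply (Rmult_le_compat_l a) in Hwin; [|apply Ha].
    pose proof (Hineq n) as Hn. apply (Rmult_le_compat_l (v n)) in Hn; [|apply Hv].
    unfold E0. lra.
Qed.

End LocalInequality.

(** * Time steps *)

Definition pair_norm (ua ub : Z -> R -> C) (n : Z) (t : R) : R := Cmod (ua n t) + Cmod (ub n t).

Definition center_bump (E : R) (K0 : nat) (n : Z) : R :=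
  if (Z.abs n <=? Z.of_nat K0)%Z then E else 0.

Definition local_growth (ua ub dua dub : Z -> R -> C) (t0 T B L E : R) (K K0 : nat) : Prop :=
  0 <= B /\ 0 <= L /\ 0 <= E /\
  forall n t, t0 - T < t < t0 + T ->
    Cmod (ua n t) <= B /\ Cmod (ub n t) <= B /\
    is_derive (fun s => ua n s) t (dua n t) /\ is_derive (fun s => ub n s) t (dub n t) /\
    Cmod (dua n t) <= L * sum_sym K (fun j => pair_norm ua ub (n + j)%Z t) + center_bump E K0 n /\
    Cmod (dub n t) <= L * sum_sym K (fun j => pair_norm ua ub (n + j)%Z t) + center_bump E K0 n.

Lemma wnorm_finite_PFin_iff w q a b : wnorm_finite w (PFin q) a b <->
  exists B, forall N, sum_sym N (fun n => w n * (abspow (Cmod (a n)) q + abspow (Cmod (b n)) q)) <= B.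
Proof.
  unfold wnorm_finite. split; intros [B HB]; exists B; intros N.
  - rewrite <- sum_f_R0_sum_sym. apply HB.
  - rewrite (sum_f_R0_sum_sym N (fun n => w n * (abspow (Cmod (a n)) q + abspow (Cmod (b n)) q))). apply HB.
Qed.

Lemma pair_norm_ge0 ua ub n t : 0 <= pair_norm ua ub n t.
Proof. unfold pair_norm. pose proof (Cmod_ge_0 (ua n t)). pose proof (Cmod_ge_0 (ub n t)). lra. Qed.

Lemma center_bump_ge0 E K0 n : 0 <= E -> 0 <= center_bump E K0 n.
Proof. unfold center_bump. destruct Z.leb; lra. Qed.

Lemma center_bump_out E K0 n : (Z.of_nat K0 < Z.abs n)%Z -> center_bump E K0 n = 0.
Proof. intros H. unfold center_bump. now replace (Z.abs n <=? Z.of_nat K0)%Z with false by lia. Qed.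

Lemma Cmod_le_Cmod_minus (x y : C) : Cmod x <= Cmod y + Cmod (Cminus x y).
Proof. replace x with (Cplus y (Cminus x y)) at 1 by complex_ring. apply Cmod_triangle. Qed.

Lemma pair_norm_le_of_deriv_le ua ub dua dub n t1 s Q :
  (forall y, Rmin t1 s <= y <= Rmax t1 s ->
     is_derive (fun r => ua n r) y (dua n y) /\ is_derive (fun r => ub n r) y (dub n y) /\
     Cmod (dua n y) <= Q /\ Cmod (dub n y) <= Q) ->
  pair_norm ua ub n s <= pair_norm ua ub n t1 + 4 * Q * Rabs (s - t1).
Proof.
  intros H.
  assert (Ha : Cmod (Cminus (ua n s) (ua n t1)) <= 2 * Q * Rabs (s - t1)).
  { apply (MVT_Cmod_le (fun r => ua n r) (fun r => dua n r)). intros y Hy. split; apply H, Hy. }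
  assert (Hb : Cmod (Cminus (ub n s) (ub n t1)) <= 2 * Q * Rabs (s - t1)).
  { apply (MVT_Cmod_le (fun r => ub n r) (fun r => dub n r)). intros y Hy. split; apply H, Hy. }
  pose proof (Cmod_le_Cmod_minus (ua n s) (ua n t1)). pose proof (Cmod_le_Cmod_minus (ub n s) (ub n t1)).
  unfold pair_norm. lra.
Qed.

Definition exponent_index (p : exponent) : R := match p with PFin q => q | PInf => 1 end.

Definition step_factor (q : R) (K : nat) (Cw : R) : R :=
  1 + abspow 3 q * abspow (2 * INR K + 1) q * window_const K Cw + window_const K Cw.

Definition step_size (q L : R) (K : nat) (Cw : R) : R := / (8 * (L + 1) * step_factor q K Cw).

Lemma step_factor_ge q K Cw :
  1 <= step_factor q K Cw /\
  abspow 3 q * abspow (2 * INR K + 1) q * window_const K Cw <= step_factor q K Cw /\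
  window_const K Cw <= step_factor q K Cw.
Proof.
  pose proof (window_const_ge1 K Cw). pose proof (abspow_ge0 3 q). pose proof (abspow_ge0 (2 * INR K + 1) q).
  assert (0 <= abspow 3 q * abspow (2 * INR K + 1) q * window_const K Cw)
    by (apply Rmult_le_pos; [apply Rmult_le_pos|]; lra).
  unfold step_factor. lra.
Qed.

Lemma step_size_pos q L K Cw : 0 <= L -> 0 < step_size q L K Cw.
Proof.
  intros HL. destruct (step_factor_ge q K Cw) as (H1 & _).
  apply Rinv_0_lt_compat. apply Rmult_lt_0_compat; lra.
Qed.

Lemma step_size_small q L K Cw d : 0 <= L -> 0 <= d -> d <= step_size q L K Cw ->
  4 * d * L <= 1 /\
  abspow 3 q * abspow (2 * INR K + 1) q * window_const K Cw * (4 * d * L) <= 1/2 /\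
  window_const K Cw * (4 * d * L) <= 1/2.
Proof.
  intros HL Hd H. destruct (step_factor_ge q K Cw) as (H1 & H2 & H3).
  set (Y := step_factor q K Cw) in *.
  assert (Hprod : d * (8 * (L + 1) * Y) <= 1).
  { unfold step_size in H. fold Y in H. apply (Rmult_le_compat_r (8 * (L + 1) * Y)) in H; [|nra].
    rewrite Rinv_l in H; nra. }
  assert (HdL : 0 <= d * L) by nra.
  assert (4 * d * L * Y <= 1/2) by nra.
  split; [|split]; nra.
Qed.

Lemma pointwise_sup_exists (f : Z -> R -> R) (I : R -> Prop) C t :
  I t -> (forall n s, I s -> f n s <= C) ->
  exists S : Z -> R, (forall n s, I s -> f n s <= S n) /\
                     (forall n Y, (forall s, I s -> f n s <= Y) -> S n <= Y).
Proof.
  intros Ht Hf.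
  set (P := fun n x => exists s, I s /\ x = f n s).
  assert (Hb : forall n, bound (P n)) by (intros n; exists C; intros x [s [Hs ->]]; auto).
  assert (He : forall n, exists x, P n x) by (intros n; now exists (f n t), t).
  exists (fun n => proj1_sig (completeness (P n) (Hb n) (He n))).
  split; intros n; destruct (completeness (P n) (Hb n) (He n)) as [m [Hub Hlub]]; simpl.
  - intros s Hs. apply Hub. now exists s.
  - intros Y HY. apply Hlub. intros x [s [Hs ->]]. auto.
Qed.

Section TimeStep.

Variables (ua ub dua dub : Z -> R -> C) (t0 T B L E : R) (K K0 : nat).
Hypothesis HG : local_growth ua ub dua dub t0 T B L E K K0.

(* [S n] is the supremum over the time step of the size at site [n]; the mean
   value theorem bounds it through the sizes at the neighbouring sites. *)
Lemma step_sup_bound t1 t2 :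
  t0 - T < t1 < t0 + T -> t0 - T < t2 < t0 + T ->
  exists S : Z -> R,
    (forall n s, Rmin t1 t2 <= s <= Rmax t1 t2 -> pair_norm ua ub n s <= S n) /\
    (forall n, S n <= 2 * B) /\
    (forall n, S n <= pair_norm ua ub n t1 + 4 * Rabs (t2 - t1) *
                 (L * sum_sym K (fun j => S (n + j)%Z) + center_bump E K0 n)).
Proof.
  destruct HG as (HB & HL & HE & HS). intros Ht1 Ht2.
  assert (HJ : forall s, Rmin t1 t2 <= s <= Rmax t1 t2 -> t0 - T < s < t0 + T).
  { intros s Hs. unfold Rmin, Rmax in Hs. destruct Rle_dec; lra. }
  assert (Hsize : forall n s, Rmin t1 t2 <= s <= Rmax t1 t2 -> pair_norm ua ub n s <= 2 * B).
  { intros n s Hs. destruct (HS n s (HJ s Hs)) as (H1 & H2 & _). unfold pair_norm. lra. }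
  assert (Ht1J : Rmin t1 t2 <= t1 <= Rmax t1 t2) by (unfold Rmin, Rmax; destruct Rle_dec; lra).
  destruct (pointwise_sup_exists (pair_norm ua ub) (fun s => Rmin t1 t2 <= s <= Rmax t1 t2)
              (2 * B) t1 Ht1J Hsize) as (S & Hup & Hlub).
  exists S. split; [exact Hup|split].
  - intros n. apply Hlub. intros s Hs. auto.
  - intros n. apply Hlub. intros s Hs.
    set (Q := L * sum_sym K (fun j => S (n + j)%Z) + center_bump E K0 n).
    assert (Hsub : forall y, Rmin t1 s <= y <= Rmax t1 s -> Rmin t1 t2 <= y <= Rmax t1 t2).
    { intros y Hy. unfold Rmin, Rmax in *. destruct (Rle_dec t1 t2), (Rle_dec t1 s); lra. }
    assert (Hst : Rabs (s - t1) <= Rabs (t2 - t1)).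
    { unfold Rmin, Rmax in Hs. unfold Rabs.
      destruct (Rle_dec t1 t2), (Rcase_abs (s - t1)), (Rcase_abs (t2 - t1)); lra. }
    assert (HQ : 0 <= Q).
    { pose proof (center_bump_ge0 E K0 n HE).
      assert (0 <= sum_sym K (fun j => S (n + j)%Z)).
      { apply sum_sym_ge0. intros j. eapply Rle_trans; [apply (pair_norm_ge0 ua ub (n + j)%Z t1)|apply Hup, Ht1J]. }
      unfold Q. nra. }
    pose proof (pair_norm_le_of_deriv_le ua ub dua dub n t1 s Q) as Hmvt.
    enough (pair_norm ua ub n s <= pair_norm ua ub n t1 + 4 * Q * Rabs (s - t1)).
    { assert (4 * Q * Rabs (s - t1) <= 4 * Q * Rabs (t2 - t1)) by (apply Rmult_le_compat_l; lra). lra. }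
    apply Hmvt. intros y Hy.
    destruct (HS n y (HJ y (Hsub y Hy))) as (_ & _ & Da & Db & Ma & Mb).
    assert (L * sum_sym K (fun j => pair_norm ua ub (n + j)%Z y) <= L * sum_sym K (fun j => S (n + j)%Z)).
    { apply Rmult_le_compat_l; [exact HL|]. apply sum_sym_le. intros j _. apply Hup, Hsub, Hy. }
    unfold Q. split; [exact Da|split; [exact Db|split; lra]].
Qed.

Lemma wnorm_finite_step_PFin w Cw q t1 t2 :
  shift_comparable Cw w -> 1 <= q ->
  t0 - T < t1 < t0 + T -> t0 - T < t2 < t0 + T ->
  4 * Rabs (t2 - t1) * L <= 1 ->
  abspow 3 q * abspow (2 * INR K + 1) q * window_const K Cw * (4 * Rabs (t2 - t1) * L) <= 1/2 ->
  wnorm_finite w (PFin q) (fun n => ua n t1) (fun n => ub n t1) ->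
  wnorm_finite w (PFin q) (fun n => ua n t2) (fun n => ub n t2).
Proof.
  intros Hw Hq Ht1 Ht2 Ha Hc. rewrite !wnorm_finite_PFin_iff. intros [B1 HB1].
  destruct (step_sup_bound t1 t2 Ht1 Ht2) as (S & Hup & HSB & Hineq).
  destruct HG as (HB & HL & HE & _).
  set (d := Rabs (t2 - t1)) in *. assert (Hd : 0 <= d) by apply Rabs_pos.
  assert (Ht1J : Rmin t1 t2 <= t1 <= Rmax t1 t2) by (unfold Rmin, Rmax; destruct Rle_dec; lra).
  assert (Ht2J : Rmin t1 t2 <= t2 <= Rmax t1 t2) by (unfold Rmin, Rmax; destruct Rle_dec; lra).
  assert (HS : forall n, 0 <= S n <= 2 * B).
  { intros n. split; [|apply HSB]. eapply Rle_trans; [apply (pair_norm_ge0 ua ub n t1)|now apply Hup]. }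
  destruct (weighted_lq_local_ineq w Cw K K0 S (fun n => pair_norm ua ub n t1)
              (fun n => 4 * d * center_bump E K0 n) (4 * d * L) (2 * B)) with q
    as [B2 HB2]; auto.
  - split; [apply Rmult_le_pos; lra|exact Ha].
  - intros n. apply pair_norm_ge0.
  - intros n. pose proof (center_bump_ge0 E K0 n HE). nra.
  - intros n Hn. rewrite center_bump_out by exact Hn. ring.
  - intros n. pose proof (Hineq n). lra.
  - exists (abspow 2 q * B1). intros N. eapply Rle_trans; [|apply Rmult_le_compat_l; [apply abspow_ge0|apply (HB1 N)]].
    rewrite <- sum_sym_scal. apply sum_sym_le. intros n _. unfold pair_norm.
    pose proof (abspow_plus_le q (Cmod (ua n t1)) (Cmod (ub n t1)) ltac:(lra) (Cmod_ge_0 _) (Cmod_ge_0 _)).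
    pose proof (proj1 (Hw n)). nra.
  - exists (2 * B2). intros N. eapply Rle_trans; [|apply Rmult_le_compat_l; [lra|apply (HB2 N)]].
    rewrite <- sum_sym_scal. apply sum_sym_le. intros n _.
    pose proof (abspow_plus_ge q (Cmod (ua n t2)) (Cmod (ub n t2)) ltac:(lra) (Cmod_ge_0 _) (Cmod_ge_0 _)).
    assert (abspow (pair_norm ua ub n t2) q <= abspow (S n) q)
      by (apply abspow_le; [lra|split; [apply pair_norm_ge0|now apply Hup]]).
    pose proof (proj1 (Hw n)). unfold pair_norm in *. nra.
Qed.

Lemma wnorm_finite_step_PInf w Cw t1 t2 :
  shift_comparable Cw w ->
  t0 - T < t1 < t0 + T -> t0 - T < t2 < t0 + T ->
  4 * Rabs (t2 - t1) * L <= 1 ->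
  window_const K Cw * (4 * Rabs (t2 - t1) * L) <= 1/2 ->
  wnorm_finite w PInf (fun n => ua n t1) (fun n => ub n t1) ->
  wnorm_finite w PInf (fun n => ua n t2) (fun n => ub n t2).
Proof.
  intros Hw Ht1 Ht2 Ha Hc HB1.
  destruct (step_sup_bound t1 t2 Ht1 Ht2) as (S & Hup & HSB & Hineq).
  destruct HG as (HB & HL & HE & _).
  set (d := Rabs (t2 - t1)) in *. assert (Hd : 0 <= d) by apply Rabs_pos.
  assert (Ht1J : Rmin t1 t2 <= t1 <= Rmax t1 t2) by (unfold Rmin, Rmax; destruct Rle_dec; lra).
  assert (Ht2J : Rmin t1 t2 <= t2 <= Rmax t1 t2) by (unfold Rmin, Rmax; destruct Rle_dec; lra).
  assert (HS : forall n, 0 <= S n <= 2 * B).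
  { intros n. split; [|apply HSB]. eapply Rle_trans; [apply (pair_norm_ge0 ua ub n t1)|now apply Hup]. }
  destruct (weighted_sup_local_ineq w Cw K K0 S (fun n => pair_norm ua ub n t1)
              (fun n => 4 * d * center_bump E K0 n) (4 * d * L) (2 * B)) as [B2 HB2]; auto.
  - split; [apply Rmult_le_pos; lra|exact Ha].
  - intros n. apply pair_norm_ge0.
  - intros n. pose proof (center_bump_ge0 E K0 n HE). nra.
  - intros n Hn. rewrite center_bump_out by exact Hn. ring.
  - intros n. pose proof (Hineq n). lra.
  - exists B2. intros n. eapply Rle_trans; [|apply (HB2 n)].
    apply Rmult_le_compat_l; [apply Hw|now apply Hup].
Qed.

Lemma wnorm_finite_step w Cw p t1 t2 :
  shift_comparable Cw w -> valid_exponent p ->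
  t0 - T < t1 < t0 + T -> t0 - T < t2 < t0 + T ->
  Rabs (t2 - t1) <= step_size (exponent_index p) L K Cw ->
  wnorm_finite w p (fun n => ua n t1) (fun n => ub n t1) ->
  wnorm_finite w p (fun n => ua n t2) (fun n => ub n t2).
Proof.
  intros Hw Hp Ht1 Ht2 Hh.
  pose proof HG as (_ & HL & _).
  destruct (step_size_small _ L K Cw _ HL (Rabs_pos _) Hh) as (Ha & Hfin & Hinf).
  destruct p as [q|].
  - now apply (wnorm_finite_step_PFin w Cw q t1 t2).
  - now apply (wnorm_finite_step_PInf w Cw t1 t2).
Qed.

End TimeStep.

Lemma propagate_by_small_steps (P : R -> Prop) t0 T h :
  0 < h -> P t0 ->
  (forall t1 t2, t0 - T < t1 < t0 + T -> t0 - T < t2 < t0 + T ->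
                 Rabs (t2 - t1) <= h -> P t1 -> P t2) ->
  forall t, t0 - T < t < t0 + T -> P t.
Proof.
  intros Hh H0 Hstep t Ht.
  destruct (INR_archimed h (Rabs (t - t0)) Hh) as [m Hm].
  assert (Hm0 : (0 < m)%nat).
  { destruct m; [simpl in Hm; pose proof (Rabs_pos (t - t0)); lra|lia]. }
  assert (HmR : 0 < INR m) by (apply lt_0_INR; auto).
  set (tk := fun k => t0 + INR k / INR m * (t - t0)).
  assert (Htk : forall k, (k <= m)%nat -> t0 - T < tk k < t0 + T).
  { intros k Hk. unfold tk.
    assert (0 <= INR k / INR m <= 1).
    { split; [apply Rmult_le_pos; [apply pos_INR|left; now apply Rinv_0_lt_compat]|].
      apply (Rmult_le_reg_r (INR m)); [exact HmR|].
      unfold Rdiv. rewrite Rmult_assoc, Rinv_l, Rmult_1_r, Rmult_1_l by lra. now apply le_INR. }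
    destruct (Rle_dec t0 t); nra. }
  assert (Hk : forall k, (k <= m)%nat -> P (tk k)).
  { induction k as [|k IH]; intros Hk.
    - unfold tk. replace (t0 + INR 0 / INR m * (t - t0)) with t0 by (simpl; field; lra). exact H0.
    - apply (Hstep (tk k)); [apply Htk; lia|apply Htk; lia| |apply IH; lia].
      unfold tk. rewrite S_INR.
      replace (t0 + (INR k + 1) / INR m * (t - t0) - (t0 + INR k / INR m * (t - t0)))
        with ((t - t0) / INR m) by (field; lra).
      unfold Rdiv. rewrite Rabs_mult, Rabs_inv, (Rabs_right (INR m)) by lra.
      apply (Rmult_le_reg_r (INR m)); [exact HmR|]. rewrite Rmult_assoc, Rinv_l by lra. lra. }
  replace t with (tk m) by (unfold tk; field; lra). apply Hk; lia.
Qed.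

(** * Patching two solutions at n = 0 *)

Definition patch (r l : cseq) : cseq := fun m => if (0 <=? m)%Z then r m else l m.

Lemma bounded_by_patch M r l : bounded_by M r -> bounded_by M l -> bounded_by M (patch r l).
Proof. intros Hr Hl m. unfold patch. destruct (0 <=? m)%Z; auto. Qed.

Lemma window_dist_eq0 K a b a' b' n :
  (forall j, (Z.abs j <= Z.of_nat K)%Z -> a (n + j)%Z = a' (n + j)%Z /\ b (n + j)%Z = b' (n + j)%Z) ->
  window_dist K a b a' b' n = 0.
Proof.
  intros H. unfold window_dist. rewrite (sum_sym_ext _ _ (fun _ => 0)).
  - rewrite sum_sym_const. ring.
  - intros j Hj. destruct (H j Hj) as [Ea Eb]. unfold site_dist. rewrite Ea, Eb.
    replace (Cminus (a' (n + j)%Z) (a' (n + j)%Z)) with (RtoC 0) by complex_ring.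
    replace (Cminus (b' (n + j)%Z) (b' (n + j)%Z)) with (RtoC 0) by complex_ring.
    rewrite Cmod_0. ring.
Qed.

Lemma Cmod_minus_le_triangle (x y z : C) : Cmod (Cminus x z) <= Cmod (Cminus x y) + Cmod (Cminus z y).
Proof.
  replace (Cminus x z) with (Cplus (Cminus x y) (Copp (Cminus z y))) by complex_ring.
  eapply Rle_trans; [apply Cmod_triangle|]. rewrite Cmod_opp. lra.
Qed.

(* Away from the junction [n = 0] the patched sequence agrees with one of the two
   solutions on the whole window, so only the sites [|n| <= K] feel the junction. *)
Lemma local_with_patch_bound F K M L a b ar br al bl n :
  local_with K M L F ->
  bounded_by M a -> bounded_by M b -> bounded_by M ar -> bounded_by M br ->
  bounded_by M al -> bounded_by M bl ->
  Cmod (Cminus (F a b n) (if (0 <=? n)%Z then F ar br n else F al bl n)) <=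
    L * window_dist K a b (patch ar al) (patch br bl) n + center_bump (2 * L) K n.
Proof.
  intros HF Ha Hb Har Hbr Hal Hbl.
  pose proof (bounded_by_patch M ar al Har Hal) as Ha'.
  pose proof (bounded_by_patch M br bl Hbr Hbl) as Hb'.
  destruct (HF a b _ _ Ha Hb Ha' Hb' n) as [H1 H2].
  assert (HL : 0 <= L) by (pose proof (Cmod_ge_0 (F a b n)); lra).
  assert (0 <= L * window_dist K a b (patch ar al) (patch br bl) n)
    by (apply Rmult_le_pos; [exact HL|apply window_dist_ge0]).
  destruct (Z_le_gt_dec (Z.abs n) (Z.of_nat K)) as [Hn|Hn].
  - unfold center_bump. replace (Z.abs n <=? Z.of_nat K)%Z with true by lia.
    assert (Hy : forall y, Cmod y <= L -> Cmod (Cminus (F a b n) y) <= 2 * L).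
    { intros y Hy. unfold Cminus. eapply Rle_trans; [apply Cmod_triangle|]. rewrite Cmod_opp. lra. }
    destruct (0 <=? n)%Z; [pose proof (Hy _ (proj1 (HF ar br ar br Har Hbr Har Hbr n)))
                          |pose proof (Hy _ (proj1 (HF al bl al bl Hal Hbl Hal Hbl n)))]; lra.
  - rewrite center_bump_out by lia. rewrite Rplus_0_r.
    destruct (Z_le_gt_dec 0 n) as [Hp|Hp].
    + replace (0 <=? n)%Z with true by lia.
      destruct (HF ar br _ _ Har Hbr Ha' Hb' n) as [_ H3].
      rewrite window_dist_eq0, Rmult_0_r in H3.
      * pose proof (Cmod_minus_le_triangle (F a b n) (F (patch ar al) (patch br bl) n) (F ar br n)). lra.
      * intros j Hj. unfold patch. now replace (0 <=? n + j)%Z with true by lia.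
    + replace (0 <=? n)%Z with false by lia.
      destruct (HF al bl _ _ Hal Hbl Ha' Hb' n) as [_ H3].
      rewrite window_dist_eq0, Rmult_0_r in H3.
      * pose proof (Cmod_minus_le_triangle (F a b n) (F (patch ar al) (patch br bl) n) (F al bl n)). lra.
      * intros j Hj. unfold patch. now replace (0 <=? n + j)%Z with false by lia.
Qed.

Lemma Cmod_Copp_Ci_minus (x y : C) :
  Cmod (Cminus (Copp (Cmult Ci x)) (Copp (Cmult Ci y))) = Cmod (Cminus x y).
Proof.
  replace (Cminus (Copp (Cmult Ci x)) (Copp (Cmult Ci y))) with (Cmult (Copp Ci) (Cminus x y)) by complex_ring.
  rewrite Cmod_mult, Cmod_opp.
  replace (Cmod Ci) with 1; [ring|]. unfold Cmod, Ci. simpl.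
  replace (0 * (0 * 1) + 1 * (1 * 1)) with 1 by ring. symmetry. apply sqrt_1.
Qed.

Lemma patched_derivative_bound F K M L (a b ar br al bl : cseq) (da dar dal : C) n :
  local_with K M L F ->
  bounded_by M a -> bounded_by M b -> bounded_by M ar -> bounded_by M br ->
  bounded_by M al -> bounded_by M bl ->
  da = Copp (Cmult Ci (F a b n)) -> dar = Copp (Cmult Ci (F ar br n)) ->
  dal = Copp (Cmult Ci (F al bl n)) ->
  Cmod (Cminus da (if (0 <=? n)%Z then dar else dal)) <=
    L * window_dist K a b (patch ar al) (patch br bl) n + center_bump (2 * L) K n.
Proof.
  intros HF Ha Hb Har Hbr Hal Hbl -> -> ->.
  pose proof (local_with_patch_bound F K M L a b ar br al bl n HF Ha Hb Har Hbr Hal Hbl) as H.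
  destruct (0 <=? n)%Z; now rewrite Cmod_Copp_Ci_minus.
Qed.

Lemma AL_solution_bounded rm rp cp cm t0 T alpha beta :
  AL_solution rm rp cp cm t0 T alpha beta ->
  exists M, 0 <= M /\ forall t, t0 - T < t < t0 + T ->
    bounded_by M (fun n => alpha n t) /\ bounded_by M (fun n => beta n t).
Proof.
  intros [[M HM] _]. exists (Rabs M). split; [apply Rabs_pos|].
  intros t Ht. pose proof (Rle_abs M). split; intros n; destruct (HM n t Ht); lra.
Qed.

Lemma bounded_by_le M M' a : M <= M' -> bounded_by M a -> bounded_by M' a.
Proof. intros HM Ha n. pose proof (Ha n). lra. Qed.

Lemma Cmod_minus_le (x y : C) : Cmod (Cminus x y) <= Cmod x + Cmod y.
Proof. unfold Cminus. eapply Rle_trans; [apply Cmod_triangle|]. rewrite Cmod_opp. lra. Qed.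

Lemma AL_solutions_common_bound rm rp cp cm t0 T alpha beta alphal betal alphar betar :
  AL_solution rm rp cp cm t0 T alpha beta ->
  AL_solution rm rp cp cm t0 T alphal betal ->
  AL_solution rm rp cp cm t0 T alphar betar ->
  exists M, 0 <= M /\ forall t, t0 - T < t < t0 + T ->
    bounded_by M (fun n => alpha n t) /\ bounded_by M (fun n => beta n t) /\
    bounded_by M (fun n => alphal n t) /\ bounded_by M (fun n => betal n t) /\
    bounded_by M (fun n => alphar n t) /\ bounded_by M (fun n => betar n t).
Proof.
  intros Hs Hsl Hsr.
  destruct (AL_solution_bounded _ _ _ _ _ _ _ _ Hs) as (Ma & HMa & Hba).
  destruct (AL_solution_bounded _ _ _ _ _ _ _ _ Hsl) as (Ml & HMl & Hbl).
  destruct (AL_solution_bounded _ _ _ _ _ _ _ _ Hsr) as (Mr & HMr & Hbr).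
  exists (Ma + Ml + Mr). split; [lra|]. intros t Ht.
  destruct (Hba t Ht), (Hbl t Ht), (Hbr t Ht).
  repeat split; eapply bounded_by_le; try eassumption; lra.
Qed.

Lemma AL_rhs_local_with rm rp cp cm M : 0 <= M ->
  exists K L, 0 <= L /\ local_with K M L (AL_alpha_rhs rm rp cp cm) /\
                        local_with K M L (AL_beta_rhs rm rp cp cm).
Proof.
  intros HM.
  destruct (is_local_AL_alpha_rhs rm rp cp cm) as [KA HA], (HA M) as [LA HLA].
  destruct (is_local_AL_beta_rhs rm rp cp cm) as [KB HB], (HB M) as [LB HLB].
  exists (max KA KB), (Rmax LA LB).
  pose proof (local_with_ge0 _ _ _ _ HLA HM). pose proof (Rmax_l LA LB).
  split; [lra|split].
  - apply (local_with_widen KA _ M LA); [lia|apply Rmax_l|exact HLA].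
  - apply (local_with_widen KB _ M LB); [lia|apply Rmax_r|exact HLB].
Qed.

Lemma AL_difference_local_growth rm rp cp cm t0 T alpha beta alphal betal alphar betar :
  AL_solution rm rp cp cm t0 T alpha beta ->
  AL_solution rm rp cp cm t0 T alphal betal ->
  AL_solution rm rp cp cm t0 T alphar betar ->
  exists dua dub B L K,
    local_growth (fun n s => Cminus (alpha n s) (if (0 <=? n)%Z then alphar n s else alphal n s))
                 (fun n s => Cminus (beta n s) (if (0 <=? n)%Z then betar n s else betal n s))
                 dua dub t0 T B L (2 * L) K K.
Proof.
  intros Hs Hsl Hsr.
  destruct (AL_solutions_common_bound _ _ _ _ _ _ _ _ _ _ _ _ Hs Hsl Hsr) as (M & HM & Hbd).
  destruct (AL_rhs_local_with rm rp cp cm M HM) as (K & L & HL & HLA & HLB).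
  destruct Hs as [_ (da & db & Hd & Heq)], Hsl as [_ (dal & dbl & Hdl & Heql)],
    Hsr as [_ (dar & dbr & Hdr & Heqr)].
  exists (fun n s => Cminus (da n s) (if (0 <=? n)%Z then dar n s else dal n s)),
         (fun n s => Cminus (db n s) (if (0 <=? n)%Z then dbr n s else dbl n s)), (2 * M), L, K.
  split; [lra|split; [exact HL|split; [lra|]]].
  intros n t Ht. destruct (Hbd t Ht) as (Ba & Bb & Bal & Bbl & Bar & Bbr).
  pose proof (bounded_by_patch _ _ _ Bar Bal n) as Bpa. pose proof (bounded_by_patch _ _ _ Bbr Bbl n) as Bpb.
  unfold patch in Bpa, Bpb.
  split; [|split; [|split; [|split; [|split]]]].
  - eapply Rle_trans; [apply Cmod_minus_le|]. pose proof (Ba n). lra.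
  - eapply Rle_trans; [apply Cmod_minus_le|]. pose proof (Bb n). lra.
  - destruct (0 <=? n)%Z; apply (is_derive_minus (fun s => alpha n s)); first [apply Hd | apply Hdr | apply Hdl]; auto.
  - destruct (0 <=? n)%Z; apply (is_derive_minus (fun s => beta n s)); first [apply Hd | apply Hdr | apply Hdl]; auto.
  - refine (patched_derivative_bound (AL_alpha_rhs rm rp cp cm) K M L _ _ _ _ _ _
              (da n t) (dar n t) (dal n t) n HLA Ba Bb Bar Bbr Bal Bbl _ _ _).
    + exact (AL_alpha_derivative _ _ _ _ _ _ (fun m => da m t) n (proj1 (Heq t Ht n))).
    + exact (AL_alpha_derivative _ _ _ _ _ _ (fun m => dar m t) n (proj1 (Heqr t Ht n))).
    + exact (AL_alpha_derivative _ _ _ _ _ _ (fun m => dal m t) n (proj1 (Heql t Ht n))).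
  - refine (patched_derivative_bound (AL_beta_rhs rm rp cp cm) K M L _ _ _ _ _ _
              (db n t) (dbr n t) (dbl n t) n HLB Ba Bb Bar Bbr Bal Bbl _ _ _).
    + exact (AL_beta_derivative _ _ _ _ _ _ (fun m => db m t) n (proj2 (Heq t Ht n))).
    + exact (AL_beta_derivative _ _ _ _ _ _ (fun m => dbr m t) n (proj2 (Heqr t Ht n))).
    + exact (AL_beta_derivative _ _ _ _ _ _ (fun m => dbl m t) n (proj2 (Heql t Ht n))).
Qed.

Lemma weight_shift_comparable (w : Z -> R) M :
  (forall n, 1 <= w n) ->
  (forall n, Rabs (w (n + 1)%Z / w n) + Rabs (w n / w (n + 1)%Z) <= M) ->
  shift_comparable M w.
Proof.
  intros Hw1 Hratio.
  assert (Hq : forall m m', Rabs (w m / w m') <= M -> w m <= M * w m').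
  { intros m m' H. pose proof (Hw1 m'). pose proof (Rle_abs (w m / w m')).
    apply (Rmult_le_reg_r (/ w m')); [apply Rinv_0_lt_compat; lra|].
    rewrite Rmult_assoc, Rinv_r, Rmult_1_r by lra. unfold Rdiv in *. lra. }
  intros n. pose proof (Hw1 n). split; [lra|split; apply Hq].
  - pose proof (Hratio n). pose proof (Rabs_pos (w (n + 1)%Z / w n)). lra.
  - pose proof (Hratio (n - 1)%Z) as Hr. replace (n - 1 + 1)%Z with n in Hr by lia.
    pose proof (Rabs_pos (w (n - 1)%Z / w n)). lra.
Qed.

Theorem lemma3p2 (w : Z -> R) (p : exponent) (rm rp : nat) (cp cm : nat -> C)
    (t0 T : R) (alpha beta alphal betal alphar betar : Z -> R -> C) :
  (forall n, 1 <= w n) ->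
  (exists M : R, forall n,
      Rabs (w (n + 1)%Z / w n) + Rabs (w n / w (n + 1)%Z) <= M) ->
  valid_exponent p ->
  0 < T ->
  AL_solution rm rp cp cm t0 T alpha beta ->
  AL_solution rm rp cp cm t0 T alphal betal ->
  AL_solution rm rp cp cm t0 T alphar betar ->
  let alt t : Z -> C := fun n => if (0 <=? n)%Z then alphar n t else alphal n t in
  let bet t : Z -> C := fun n => if (0 <=? n)%Z then betar n t else betal n t in
  wnorm_finite w p (fun n => Cminus (alpha n t0) (alt t0 n))
                   (fun n => Cminus (beta n t0) (bet t0 n)) ->
  forall t, t0 - T < t < t0 + T ->
  wnorm_finite w p (fun n => Cminus (alpha n t) (alt t n))
                   (fun n => Cminus (beta n t) (bet t n)).
Proof.
  intros Hw1 [M Hratio] Hp _ Hsol Hsoll Hsolr alt bet Hinit.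
  pose proof (weight_shift_comparable w M Hw1 Hratio) as Hw.
  destruct (AL_difference_local_growth _ _ _ _ _ _ _ _ _ _ _ _ Hsol Hsoll Hsolr)
    as (dua & dub & B & L & K & HG).
  pose proof HG as (_ & HL & _).
  apply (propagate_by_small_steps
           (fun t => wnorm_finite w p (fun n => Cminus (alpha n t) (alt t n))
                                      (fun n => Cminus (beta n t) (bet t n)))
           t0 T (step_size (exponent_index p) L K M)); [now apply step_size_pos|exact Hinit|].
  intros t1 t2 Ht1 Ht2 Hh.
  exact (wnorm_finite_step _ _ _ _ t0 T B L (2 * L) K K HG w M p t1 t2 Hw Hp Ht1 Ht2 Hh).
Qed.
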